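(* Let $m\in\mathbb{N}_+$, $p=\frac{2m}{2m-1}$, $\phi\in C^\infty([0,1];\mathbb{R})$ and $0<d_1\le d_2$. For $\gamma,R>0$ set $Q(t,x)=2\gamma R^p\big(\frac xR+\phi(t)\big)^2$ for $(t,x)\in[0,1]\times\mathbb{R}$. There exist $\gamma_0,R_0,C>0$ such that for all $\gamma\ge\gamma_0$, $R\ge R_0$, and all $u\in C_c^\infty((0,1)\times\mathbb{R};\mathbb{C})$ satisfying $d_1\le\big|\frac xR+\phi(t)\big|\le d_2$ on $\mathrm{supp}\,u$, $$\iint e^{Q}\big|D_tu+D_x^{2m}u\big|^2\,dx\,dt\ \ge\ C\gamma^{4m-1}R^p\iint e^{Q}|u|^2\,dx\,dt.$$
   Context: $D_t=i^{-1}\partial_t$, $D_x=i^{-1}\partial_x$; integrals are over $(0,1)\times\mathbb{R}$. *)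

From Stdlib Require Import Reals Lra Lia ClassicalEpsilon.
Open Scope R_scope.

(* Riemann integral of f over [a,b] (value of RiemannInt when integrable;
   chosen by Hilbert's epsilon, so no proof object appears in statements). *)
Definition RInt (f : R -> R) (a b : R) : R :=
  epsilon (inhabits 0)
    (fun v => exists pr : Riemann_integrable f a b, RiemannInt pr = v).

Definition RInt_line (f : R -> R) : R :=
  epsilon (inhabits 0)
    (fun v => forall eps, eps > 0 -> exists M0, forall M, M >= M0 ->
       Rabs (RInt f (- M) M - v) < eps).

Definition iint (F : R -> R -> R) : R :=
  RInt (fun t => RInt_line (fun x => F t x)) 0 1.

Definition cont2 (f : R -> R -> R) : Prop :=
  forall t x eps, eps > 0 -> exists delta, delta > 0 /\
    forall t' x', Rabs (t' - t) < delta -> Rabs (x' - x) < delta ->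
      Rabs (f t' x' - f t x) < eps.

(* D is the family of all mixed partial derivatives of a C^oo function
   f = D 0 0 on R^2 : D i j = d_t^i d_x^j f, all existing and continuous. *)
Definition smooth_family (D : nat -> nat -> R -> R -> R) : Prop :=
  (forall i j t x, derivable_pt_lim (fun s => D i j s x) t (D (S i) j t x)) /\
  (forall i j t x, derivable_pt_lim (fun y => D i j t y) x (D i (S j) t x)) /\
  (forall i j, cont2 (D i j)).

Definition deriv_within01 (f : R -> R) (x l : R) : Prop :=
  limit1_in (fun y => (f y - f x) / (y - x))
            (fun y => 0 <= y <= 1 /\ y <> x) l x.

Definition smooth01 (phi : R -> R) : Prop :=
  exists D : nat -> R -> R,
    (forall x, 0 <= x <= 1 -> D 0%nat x = phi x) /\
    (forall n x, 0 <= x <= 1 -> deriv_within01 (D n) x (D (S n) x)).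

(* (t,x) lies in the support (closure of the nonzero set) of u = ur + i ui. *)
Definition in_supp (ur ui : R -> R -> R) (t x : R) : Prop :=
  forall eps, eps > 0 -> exists t' x',
    Rabs (t' - t) < eps /\ Rabs (x' - x) < eps /\
    (ur t' x' <> 0 \/ ui t' x' <> 0).

Definition compact_supp_strip (ur ui : R -> R -> R) : Prop :=
  exists a b L, 0 < a /\ b < 1 /\
    forall t x, in_supp ur ui t x -> a <= t <= b /\ Rabs x <= L.

(* Real / imaginary parts of D_t u + D_x^{2m} u, where D = i^{-1} d,
   u = Ur 0 0 + i Ui 0 0:  D_t u = d_t Ui - i d_t Ur,
   D_x^{2m} u = (-1)^m d_x^{2m} u. *)
Definition Pu_re (m : nat) (Ur Ui : nat -> nat -> R -> R -> R) (t x : R) : R :=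
  Ui 1%nat 0%nat t x + (-1) ^ m * Ur 0%nat (2 * m)%nat t x.
Definition Pu_im (m : nat) (Ur Ui : nat -> nat -> R -> R -> R) (t x : R) : R :=
  - Ur 1%nat 0%nat t x + (-1) ^ m * Ui 0%nat (2 * m)%nat t x.

Definition pexp (m : nat) : R := 2 * INR m / (2 * INR m - 1).

Definition Qw (m : nat) (phi : R -> R) (g Rr t x : R) : R :=
  2 * g * Rpower Rr (pexp m) * (x / Rr + phi t) ^ 2.

(* Fix [t], put [s = R phi t] and [a = 2 gamma R^(p-2)], so that [e^Q = exp (a (x + s)^2)].
   For this weight the adjoint of [d/dx] is [-T] with [T f = f' + 2 a (x + s) f], so the adjoint of
   [d^(2m)/dx^(2m)] is [T^(2m)]. On the support [|x + s| >= R d1], whence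
   [|T f|^2 >= (a^2 R^2 d1^2 - a) |f|^2], and the commutator [[T, d/dx] = -2a] gives
   [|f^(k+1)|^2 >= |T^(k+1) f|^2 + 2 a (k+1)^2 |T^k f|^2].
   Writing [d_t = X + R phi'(t) d_x], with the weight constant along [X], and expanding
   [e^Q |D_t u + D_x^(2m) u|^2], the cross terms are an exact derivative along [X], a skew-adjoint
   pairing, and an error [O(R phi'' a R d2) e^Q |u|^2 = O(gamma R^p) e^Q |u|^2]. What remains is the
   difference of the weighted norms of the spatial part and of its conjugate by [T], which is at least
   [a/2 (a^2 R^2 d1^2 - a)^(2m-1) |u|^2 ~ gamma^(4m-1) R^p |u|^2] and absorbs the error for large gamma. *)

From Pilot Require Import Defs.
From Stdlib Require Import Reals Lra Lia ClassicalEpsilon Classical FunctionalExtensionality.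
From Coquelicot Require Import Coquelicot.
Open Scope R_scope.

(* From here on [RInt] is Coquelicot's integral; the one of the statement is [Defs.RInt]. *)

Lemma continuity_of_derivative (f f' : R -> R) :
  (forall x, derivable_pt_lim f x (f' x)) -> continuity f.
Proof. intros Hf x. apply derivable_continuous_pt. exists (f' x). apply Hf. Qed.

Lemma derivable_pt_lim_value (f : R -> R) x l l' :
  l = l' -> derivable_pt_lim f x l -> derivable_pt_lim f x l'.
Proof. now intros <-. Qed.

Lemma derivable_pt_lim_exp_comp (f : R -> R) x l :
  derivable_pt_lim f x l -> derivable_pt_lim (fun y => exp (f y)) x (exp (f x) * l).
Proof. intros Hf. exact (derivable_pt_lim_comp f exp x l _ Hf (derivable_pt_lim_exp (f x))). Qed.

Lemma derivable_pt_lim_sqr (f : R -> R) x l :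
  derivable_pt_lim f x l -> derivable_pt_lim (fun y => f y ^ 2) x (2 * f x * l).
Proof.
  intros Hf. replace (2 * f x * l) with (l * f x + f x * l) by ring.
  apply (derivable_pt_lim_ext (fun y => f y * f y)); [intros; ring|].
  now apply derivable_pt_lim_mult.
Qed.

Lemma derivable_pt_lim_locally_zero (f : R -> R) x d :
  0 < d -> (forall y, Rabs (y - x) < d -> f y = 0) -> derivable_pt_lim f x 0.
Proof.
  intros Hd Hf eps Heps. exists (mkposreal d Hd). intros h Hh0 Hh. simpl in Hh.
  rewrite (Hf (x + h)), (Hf x).
  - replace ((0 - 0) / h - 0) with 0 by (unfold Rdiv; ring). rewrite Rabs_R0. lra.
  - rewrite Rminus_eq_0, Rabs_R0. lra.
  - now replace (x + h - x) with h by ring.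
Qed.

Lemma ex_RInt_continuity (f : R -> R) a b : continuity f -> ex_RInt f a b.
Proof.
  intros Hf. apply (ex_RInt_continuous (V := R_CompleteNormedModule)).
  intros z _. apply continuity_pt_filterlim, Hf.
Qed.

(* Restatements of Coquelicot lemmas at type [R], so that [ring] applies to the results. *)
Lemma RInt_ext_R (f g : R -> R) a b :
  (forall x, Rmin a b < x < Rmax a b -> f x = g x) -> RInt f a b = RInt g a b.
Proof. apply RInt_ext. Qed.

Lemma RInt_Rplus (f g : R -> R) a b : ex_RInt f a b -> ex_RInt g a b ->
  RInt (fun x => f x + g x) a b = RInt f a b + RInt g a b.
Proof. intros. now apply (RInt_plus (V := R_CompleteNormedModule)). Qed.

Lemma RInt_Rminus (f g : R -> R) a b : ex_RInt f a b -> ex_RInt g a b ->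
  RInt (fun x => f x - g x) a b = RInt f a b - RInt g a b.
Proof. intros. now apply (RInt_minus (V := R_CompleteNormedModule)). Qed.

Lemma RInt_Rmult_l (f : R -> R) a b c : ex_RInt f a b ->
  RInt (fun x => c * f x) a b = c * RInt f a b.
Proof. intros. now apply (RInt_scal (V := R_CompleteNormedModule)). Qed.

Lemma RInt_eq0 (f : R -> R) a b :
  (forall x, Rmin a b < x < Rmax a b -> f x = 0) -> RInt f a b = 0.
Proof.
  intros Hf. rewrite (RInt_ext f (fun _ => 0)), RInt_const; [|exact Hf].
  unfold scal; simpl; unfold mult; simpl. ring.
Qed.

Lemma RInt_ge0 (f : R -> R) a b : a <= b -> ex_RInt f a b ->
  (forall x, a < x < b -> 0 <= f x) -> 0 <= RInt f a b.
Proof.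
  intros Hab Hf Hpos. rewrite <- (RInt_eq0 (fun _ => 0) a b) by easy.
  apply RInt_le; auto. apply ex_RInt_const.
Qed.

Lemma RInt_derivative_compact (h h' : R -> R) K :
  (forall x, derivable_pt_lim h x (h' x)) -> continuity h' ->
  h K = 0 -> h (- K) = 0 -> RInt h' (- K) K = 0.
Proof.
  intros Hd Hc HK HmK. apply is_RInt_unique.
  replace 0 with (minus (h K) (h (- K)))
    by (rewrite HK, HmK; unfold minus, plus, opp; simpl; ring).
  apply (is_RInt_derive (V := R_CompleteNormedModule)).
  - intros x _. now apply is_derive_Reals.
  - intros x _. apply continuity_pt_filterlim, Hc.
Qed.

Lemma Defs_RInt_continuous (f : R -> R) a b : a <= b ->
  (forall z, a <= z <= b -> continuity_pt f z) -> Defs.RInt f a b = RInt f a b.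
Proof.
  intros Hab Hf. unfold Defs.RInt.
  assert (Hex : ex_RInt f a b).
  { apply (ex_RInt_continuous (V := R_CompleteNormedModule)). intros z Hz.
    rewrite Rmin_left, Rmax_right in Hz by lra. now apply continuity_pt_filterlim, Hf. }
  set (P := fun v => exists pr : Riemann_integrable f a b, RiemannInt pr = v).
  destruct (epsilon_spec (inhabits 0) P (ex_intro _ _ (ex_intro _ (ex_RInt_Reals_0 f a b Hex) eq_refl)))
    as [pr <-].
  now rewrite (RInt_Reals f a b pr).
Qed.

Lemma RInt_line_compact (f : R -> R) K : 0 < K -> continuity f ->
  (forall x, K <= Rabs x -> f x = 0) -> RInt_line f = RInt f (- K) K.
Proof.
  intros HK Hf Hz. unfold RInt_line.
  assert (Hint : forall M, K <= M -> Defs.RInt f (- M) M = RInt f (- K) K).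
  { intros M HM. rewrite Defs_RInt_continuous by (lra || auto).
    rewrite <- (RInt_Chasles f (- M) (- K) M), <- (RInt_Chasles f (- K) K M);
      try apply ex_RInt_continuity; auto.
    rewrite (RInt_eq0 f (- M) (- K)), (RInt_eq0 f K M).
    - unfold plus; simpl. ring.
    - intros x Hx. rewrite Rmin_left, Rmax_right in Hx by lra.
      apply Hz. rewrite Rabs_right; lra.
    - intros x Hx. rewrite Rmin_left, Rmax_right in Hx by lra.
      apply Hz. rewrite Rabs_left; lra. }
  set (P := fun v => forall eps, eps > 0 -> exists M0, forall M, M >= M0 ->
         Rabs (Defs.RInt f (- M) M - v) < eps).
  assert (HP : P (RInt f (- K) K)).
  { intros eps Heps. exists K. intros M HM. rewrite Hint by lra.
    rewrite Rminus_eq_0, Rabs_R0. lra. }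
  assert (Hv := epsilon_spec (inhabits 0) P (ex_intro _ _ HP)).
  set (v := epsilon (inhabits 0) P) in *.
  destruct (Req_dec v (RInt f (- K) K)) as [E|E]; [easy|exfalso].
  assert (Hd : Rabs (RInt f (- K) K - v) > 0) by (apply Rabs_pos_lt; lra).
  destruct (Hv _ Hd) as [M0 HM0].
  specialize (HM0 (Rmax M0 K) (Rle_ge _ _ (Rmax_l _ _))).
  rewrite Hint in HM0 by apply Rmax_r. rewrite Rabs_minus_sym in HM0. lra.
Qed.

Definition continuous2 (F : R -> R -> R) := forall t x, continuity_2d_pt F t x.

Lemma continuity_2d_pt_swap (F : R -> R -> R) t x :
  continuity_2d_pt F t x -> continuity_2d_pt (fun x t => F t x) x t.
Proof. intros H eps. destruct (H eps) as [d Hd]. exists d. intros u v Hu Hv. now apply Hd. Qed.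

Lemma continuity_2d_pt_slice (F : R -> R -> R) t x :
  continuity_2d_pt F t x -> continuity_pt (F t) x.
Proof.
  intros H. apply continuity_pt_filterlim.
  apply continuity_2d_pt_filterlim in H. intros P HP. destruct (H P HP) as [d Hd].
  exists d. intros y Hy. apply (Hd (t, y)). split; simpl; [apply ball_center | exact Hy].
Qed.

Lemma continuous2_slice (F : R -> R -> R) t : continuous2 F -> continuity (F t).
Proof. intros HF x. apply continuity_2d_pt_slice, HF. Qed.

Lemma continuous2_of_cont2 (F : R -> R -> R) : cont2 F -> continuous2 F.
Proof.
  intros H t x eps. destruct (H t x eps (cond_pos eps)) as [d [Hd Hd2]].
  exists (mkposreal d Hd). intros u v Hu Hv. now apply Hd2.
Qed.

Lemma continuity_2d_pt_of_t (f : R -> R) t x :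
  continuity_pt f t -> continuity_2d_pt (fun t _ => f t) t x.
Proof.
  intros H. apply (continuity_1d_2d_pt_comp f (fun u _ => u) t x H).
  apply continuity_2d_pt_id1.
Qed.

Lemma continuity_2d_pt_exp (F : R -> R -> R) t x :
  continuity_2d_pt F t x -> continuity_2d_pt (fun t x => exp (F t x)) t x.
Proof.
  intros H. apply (continuity_1d_2d_pt_comp exp F t x); auto.
  apply derivable_continuous_pt. exists (exp (F t x)). apply derivable_pt_lim_exp.
Qed.

Lemma continuity_2d_pt_pow (F : R -> R -> R) n t x :
  continuity_2d_pt F t x -> continuity_2d_pt (fun t x => F t x ^ n) t x.
Proof.
  intros H. induction n; simpl.
  - apply continuity_2d_pt_const.
  - now apply (continuity_2d_pt_mult F (fun t x => F t x ^ n)).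
Qed.

(* Continuity of expressions built with [+ - * ^ exp] from functions handled by [base];
   the library lemmas need their function arguments as explicit lambdas to be usable by [apply]. *)
Ltac continuity_2d base := repeat first
  [ base
  | apply continuity_2d_pt_const | apply continuity_2d_pt_id2
  | apply (continuity_2d_pt_exp (fun t x => _)) | apply (continuity_2d_pt_pow (fun t x => _))
  | apply (continuity_2d_pt_plus (fun t x => _) (fun t x => _))
  | apply (continuity_2d_pt_minus (fun t x => _) (fun t x => _))
  | apply (continuity_2d_pt_mult (fun t x => _) (fun t x => _))
  | apply (continuity_2d_pt_opp (fun t x => _)) ].

Section StripIntegral.
Variable K : R.
Hypothesis HK : 0 < K.

Lemma continuity_RInt_param (F : R -> R -> R) : continuous2 F ->
  continuity (fun t => RInt (F t) (- K) K).
Proof.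
  intros HF t0 eps Heps.
  assert (He : 0 < eps / (2 * K + 1)) by (apply Rdiv_lt_0_compat; lra).
  destruct (uniform_continuity_2d_1d (fun x t => F t x) (- K) K t0
              (fun x _ => continuity_2d_pt_swap F t0 x (HF t0 x)) (mkposreal _ He)) as [d Hd].
  exists d. split; [apply cond_pos|]. intros t [_ Ht]. simpl in *. unfold R_dist in *.
  rewrite <- RInt_Rminus by (apply ex_RInt_continuity, continuous2_slice, HF).
  apply Rle_lt_trans with ((K - - K) * (eps / (2 * K + 1))).
  - apply abs_RInt_le_const; [lra| |].
    + apply ex_RInt_continuity. intros x.
      apply continuity_pt_minus; apply continuity_2d_pt_slice, HF.
    + intros x Hx. left. assert (0 < d) by apply cond_pos. apply Rabs_def2 in Ht.
      apply (Hd x t0 x t); simpl; try lra. rewrite Rminus_eq_0, Rabs_R0. lra.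
  - apply Rmult_lt_reg_r with (2 * K + 1); [lra|]. field_simplify; lra.
Qed.

Lemma iint_compact (F : R -> R -> R) : continuous2 F ->
  (forall t x, K <= Rabs x -> F t x = 0) ->
  iint F = RInt (fun t => RInt (F t) (- K) K) 0 1.
Proof.
  intros HF Hz. unfold iint.
  rewrite (Defs_RInt_continuous (fun t => RInt_line (fun x => F t x))); [| lra |].
  - apply RInt_ext. intros t _. apply RInt_line_compact; auto. now apply continuous2_slice.
  - intros z _. eapply continuity_pt_ext; [|apply (continuity_RInt_param F HF z)].
    intros t. symmetry. apply RInt_line_compact; auto. now apply continuous2_slice.
Qed.

Definition RInt2 (F : R -> R -> R) : R := RInt (fun t => RInt (F t) (- K) K) 0 1.

Lemma ex_RInt_outer (F : R -> R -> R) : continuous2 F ->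
  ex_RInt (fun t => RInt (F t) (- K) K) 0 1.
Proof. intros HF. now apply ex_RInt_continuity, continuity_RInt_param. Qed.

Lemma RInt2_plus (F G : R -> R -> R) : continuous2 F -> continuous2 G ->
  RInt2 (fun t x => F t x + G t x) = RInt2 F + RInt2 G.
Proof.
  intros HF HG. unfold RInt2. rewrite <- RInt_Rplus by now apply ex_RInt_outer.
  apply RInt_ext. intros t _.
  apply RInt_Rplus; now apply ex_RInt_continuity, continuous2_slice.
Qed.

Lemma RInt2_le_inner (F G : R -> R -> R) : continuous2 F -> continuous2 G ->
  (forall t, 0 < t < 1 -> RInt (F t) (- K) K <= RInt (G t) (- K) K) -> RInt2 F <= RInt2 G.
Proof. intros HF HG H. apply RInt_le; auto; try lra; now apply ex_RInt_outer. Qed.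

Lemma RInt2_le (F G : R -> R -> R) : continuous2 F -> continuous2 G ->
  (forall t x, 0 < t < 1 -> F t x <= G t x) -> RInt2 F <= RInt2 G.
Proof.
  intros HF HG H. apply RInt2_le_inner; auto. intros t Ht.
  apply RInt_le; try lra; try (now apply ex_RInt_continuity, continuous2_slice).
  intros x _. now apply H.
Qed.

Lemma RInt2_scal (F : R -> R -> R) c : continuous2 F ->
  RInt2 (fun t x => c * F t x) = c * RInt2 F.
Proof.
  intros HF. unfold RInt2. rewrite <- RInt_Rmult_l by now apply ex_RInt_outer.
  apply RInt_ext. intros t _. apply RInt_Rmult_l. now apply ex_RInt_continuity, continuous2_slice.
Qed.

Lemma is_derive_RInt_slice (H Ht : R -> R -> R) t :
  (forall t x, derivable_pt_lim (fun s => H s x) t (Ht t x)) -> continuous2 Ht ->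
  (forall t, continuity (H t)) -> is_derive (fun t => RInt (H t) (- K) K) t (RInt (Ht t) (- K) K).
Proof.
  intros HDt HCt Hslice.
  assert (HdH : forall t x, Derive (fun s => H s x) t = Ht t x).
  { intros s x. apply is_derive_unique, is_derive_Reals, HDt. }
  rewrite (RInt_ext (Ht t) (fun x => Derive (fun s => H s x) t)) by (intros; now rewrite HdH).
  apply (is_derive_RInt_param (fun s x => H s x)).
  - apply filter_forall. intros y x _. exists (Ht y x). apply is_derive_Reals, HDt.
  - intros x _. eapply continuity_2d_pt_ext; [|apply HCt]. intros; now rewrite HdH.
  - apply filter_forall. intros y. now apply ex_RInt_continuity.
Qed.

(* Integration by parts in [t] and in [x]: the derivative of [H] along the field
   [d_t - c(t) d_x] integrates to zero when [H] vanishes on the boundary of the strip. *)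
Lemma RInt2_transport_derivative (H Ht Hx : R -> R -> R) (c : R -> R) :
  (forall t x, derivable_pt_lim (fun s => H s x) t (Ht t x)) ->
  (forall t x, derivable_pt_lim (H t) x (Hx t x)) ->
  continuous2 Ht -> continuous2 Hx ->
  (forall t x, K <= Rabs x -> H t x = 0) ->
  (forall x, H 0 x = 0) -> (forall x, H 1 x = 0) ->
  RInt2 (fun t x => Ht t x - c t * Hx t x) = 0.
Proof.
  intros HDt HDx HCt HCx Hz H0 H1.
  assert (Hslice : forall t, continuity (H t)) by (intros t; exact (continuity_of_derivative _ _ (HDx t))).
  assert (Ex : forall t, RInt (fun x => Ht t x - c t * Hx t x) (- K) K = RInt (Ht t) (- K) K).
  { intros t.
    assert (Hx0 : RInt (Hx t) (- K) K = 0).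
    { apply (RInt_derivative_compact (H t)); auto.
      - now apply continuous2_slice.
      - apply Hz. rewrite Rabs_right; lra.
      - apply Hz. rewrite Rabs_left; lra. }
    assert (Ex_t : ex_RInt (Ht t) (- K) K) by now apply ex_RInt_continuity, continuous2_slice.
    assert (Ex_x : ex_RInt (Hx t) (- K) K) by now apply ex_RInt_continuity, continuous2_slice.
    rewrite RInt_Rminus, RInt_Rmult_l, Hx0
      by (auto || now apply (ex_RInt_scal (V := R_CompleteNormedModule))).
    now rewrite Rmult_0_r, Rminus_0_r. }
  unfold RInt2. rewrite (RInt_ext _ (fun t => RInt (Ht t) (- K) K)) by (intros; apply Ex).
  assert (HI := is_RInt_derive (V := R_CompleteNormedModule) (fun t => RInt (H t) (- K) K) _ 0 1
                  (fun t _ => is_derive_RInt_slice H Ht t HDt HCt Hslice)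
                  (fun t _ => proj1 (continuity_pt_filterlim _ _) (continuity_RInt_param Ht HCt t))).
  rewrite (is_RInt_unique _ _ _ _ HI), !RInt_eq0 by auto.
  unfold minus, plus, opp; simpl. ring.
Qed.

End StripIntegral.

(* A jet [F] stands for the function [F 0] together with its derivatives [F j]. *)
Definition jet := nat -> R -> R.

Definition jet_eq (F G : jet) := forall j x, F j x = G j x.
Definition jet_add (F G : jet) : jet := fun j x => F j x + G j x.
Definition jet_scal (c : R) (F : jet) : jet := fun j x => c * F j x.
Definition jet_deriv (F : jet) : jet := fun j => F (S j).
Fixpoint jet_derivn (k : nat) (F : jet) : jet :=
  match k with O => F | S k => jet_deriv (jet_derivn k F) end.

Lemma jet_derivn_eq k F j x : jet_derivn k F j x = F (k + j)%nat x.
Proof.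
  revert j; induction k as [|k IH]; intros j; simpl; [easy|].
  unfold jet_deriv. rewrite IH. f_equal. lia.
Qed.

Section Weight.
Variables a s : R.

Definition lam (x : R) := a * (x + s).
Definition wt (x : R) := exp (a * (x + s) ^ 2).

(* Jets of [lam f] and of the conjugated derivative [wt^-1 (wt f)' = f' + 2 lam f];
   since [lam' = a] and [lam'' = 0], Leibniz' rule has only two terms
   (at [j = 0] the junk [F (pred 0)] is multiplied by [INR 0]). *)
Definition jet_lam (F : jet) : jet := fun j x => lam x * F j x + INR j * a * F (pred j) x.
Definition cderiv (F : jet) : jet :=
  fun j x => F (S j) x + 2 * lam x * F j x + 2 * INR j * a * F (pred j) x.
Fixpoint cderivn (k : nat) (F : jet) : jet :=
  match k with O => F | S k => cderiv (cderivn k F) end.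

Lemma wt_pos x : 0 < wt x.
Proof. apply exp_pos. Qed.

Lemma derivable_pt_lim_lam x : derivable_pt_lim lam x a.
Proof. apply is_derive_Reals. unfold lam. auto_derive; [easy | simpl; ring]. Qed.

Lemma derivable_pt_lim_wt x : derivable_pt_lim wt x (wt x * (2 * lam x)).
Proof. apply is_derive_Reals. unfold wt, lam. auto_derive; [easy | simpl; ring]. Qed.

Lemma continuity_wt : continuity wt.
Proof. exact (continuity_of_derivative _ _ derivable_pt_lim_wt). Qed.

Lemma cderiv_add F G : jet_eq (cderiv (jet_add F G)) (jet_add (cderiv F) (cderiv G)).
Proof. intros j x; unfold cderiv, jet_add; ring. Qed.

Lemma cderiv_scal c F : jet_eq (cderiv (jet_scal c F)) (jet_scal c (cderiv F)).
Proof. intros j x; unfold cderiv, jet_scal; ring. Qed.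

Lemma cderiv_ext F G : jet_eq F G -> jet_eq (cderiv F) (cderiv G).
Proof. intros E j x; unfold cderiv; now rewrite !E. Qed.

Lemma cderivn_cderiv k F : jet_eq (cderivn k (cderiv F)) (cderiv (cderivn k F)).
Proof. induction k; simpl; intros j x; auto. now apply cderiv_ext. Qed.

(* The commutator [[T, d/dx] = -2a]. *)
Lemma cderiv_deriv F :
  jet_eq (cderiv (jet_deriv F)) (jet_add (jet_deriv (cderiv F)) (jet_scal (-2 * a) F)).
Proof.
  intros j x; unfold cderiv, jet_deriv, jet_add, jet_scal.
  destruct j; simpl pred; [simpl INR | rewrite !S_INR]; ring.
Qed.

Lemma cderivn_deriv k F : jet_eq (cderivn k (jet_deriv F))
  (jet_add (jet_deriv (cderivn k F)) (jet_scal (-2 * a * INR k) (cderivn (pred k) F))).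
Proof.
  induction k as [|k IH]; intros j x.
  - simpl. unfold jet_add, jet_scal. ring.
  - simpl cderivn. rewrite (cderiv_ext _ _ IH), cderiv_add. unfold jet_add at 1.
    rewrite cderiv_deriv, cderiv_scal. unfold jet_add, jet_scal.
    destruct k; [simpl; ring|]. simpl pred. simpl cderivn. rewrite (S_INR (S k)). ring.
Qed.

Lemma cderivn_zero k (F : jet) x : (forall j, F j x = 0) -> forall j, cderivn k F j x = 0.
Proof. intros H. induction k; intros j; simpl; auto. unfold cderiv. rewrite !IHk. ring. Qed.

Section Admissible.
Variables K r : R.
Hypothesis HK : 0 < K.

(* The functions considered live in [-K, K] and vanish within distance [r] of [-s],
   where [|lam|] is small. *)
Definition admissible (F : jet) : Prop :=
  (forall j x, derivable_pt_lim (F j) x (F (S j) x)) /\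
  (forall j x, K <= Rabs x -> F j x = 0) /\
  (forall j x, Rabs (x + s) < r -> F j x = 0).

Definition wip (F G : jet) : R := RInt (fun x => wt x * (F 0%nat x * G 0%nat x)) (- K) K.

Lemma admissible_continuity F j : admissible F -> continuity (F j).
Proof. intros [H _]. exact (continuity_of_derivative _ _ (H j)). Qed.

Lemma admissible_deriv F : admissible F -> admissible (jet_deriv F).
Proof. intros [H1 [H2 H3]]; unfold jet_deriv; repeat split; intros; auto. Qed.

Lemma admissible_derivn k F : admissible F -> admissible (jet_derivn k F).
Proof. induction k; simpl; intros; auto. now apply admissible_deriv, IHk. Qed.

Lemma admissible_add F G : admissible F -> admissible G -> admissible (jet_add F G).
Proof.
  intros [F1 [F2 F3]] [G1 [G2 G3]]; unfold jet_add; repeat split; intros.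
  - now apply derivable_pt_lim_plus.
  - rewrite F2, G2; auto; ring.
  - rewrite F3, G3; auto; ring.
Qed.

Lemma admissible_scal c F : admissible F -> admissible (jet_scal c F).
Proof.
  intros [F1 [F2 F3]]; unfold jet_scal; repeat split; intros.
  - now apply derivable_pt_lim_scal.
  - rewrite F2; auto; ring.
  - rewrite F3; auto; ring.
Qed.

Lemma admissible_jet_lam F : admissible F -> admissible (jet_lam F).
Proof.
  intros [F1 [F2 F3]]; unfold jet_lam; repeat split; intros.
  - assert (D := derivable_pt_lim_plus _ _ x _ _
                  (derivable_pt_lim_mult _ _ x _ _ (derivable_pt_lim_lam x) (F1 j x))
                  (derivable_pt_lim_scal _ (INR j * a) x _ (F1 (pred j) x))).
    eapply derivable_pt_lim_ext; [intros; reflexivity|].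
    replace (lam x * F (S j) x + INR (S j) * a * F (pred (S j)) x)
      with (a * F j x + lam x * F (S j) x + INR j * a * F (S (pred j)) x); [exact D|].
    destruct j; simpl pred; [simpl INR | rewrite !S_INR]; ring.
  - rewrite !F2; auto; ring.
  - rewrite !F3; auto; ring.
Qed.

Lemma admissible_cderiv F : admissible F -> admissible (cderiv F).
Proof.
  intros HF.
  assert (E : jet_eq (cderiv F) (jet_add (jet_deriv F) (jet_scal 2 (jet_lam F)))).
  { intros j x. unfold cderiv, jet_add, jet_deriv, jet_scal, jet_lam. ring. }
  assert (HE := admissible_add _ _ (admissible_deriv _ HF)
                  (admissible_scal 2 _ (admissible_jet_lam _ HF))).
  destruct HE as [E1 [E2 E3]]. repeat split; intros; rewrite ?E; auto.
  eapply derivable_pt_lim_ext; [intros; symmetry; apply E|]. auto.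
Qed.

Lemma admissible_cderivn k F : admissible F -> admissible (cderivn k F).
Proof. induction k; simpl; intros; auto. now apply admissible_cderiv, IHk. Qed.

Lemma ex_RInt_wip F G : admissible F -> admissible G ->
  ex_RInt (fun x => wt x * (F 0%nat x * G 0%nat x)) (- K) K.
Proof.
  intros HF HG. apply ex_RInt_continuity, continuity_mult; [apply continuity_wt|].
  apply continuity_mult; now apply admissible_continuity.
Qed.

Lemma wip_sym F G : wip F G = wip G F.
Proof. unfold wip. apply RInt_ext_R. intros; ring. Qed.

Lemma wip_ext F F' G G' : (forall x, F 0%nat x = F' 0%nat x) ->
  (forall x, G 0%nat x = G' 0%nat x) -> wip F G = wip F' G'.
Proof. intros E1 E2; unfold wip. apply RInt_ext_R. intros; now rewrite E1, E2. Qed.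

Lemma wip_jet_eq F F' G G' : jet_eq F F' -> jet_eq G G' -> wip F G = wip F' G'.
Proof. intros E1 E2. apply wip_ext; intros; [apply E1 | apply E2]. Qed.

Lemma wip_add_l F G H : admissible F -> admissible G -> admissible H ->
  wip (jet_add F G) H = wip F H + wip G H.
Proof.
  intros. unfold wip, jet_add. rewrite <- RInt_Rplus by now apply ex_RInt_wip.
  apply RInt_ext_R; intros; ring.
Qed.

Lemma wip_add_r F G H : admissible F -> admissible G -> admissible H ->
  wip F (jet_add G H) = wip F G + wip F H.
Proof. intros. rewrite wip_sym, wip_add_l, (wip_sym G), (wip_sym H); auto. Qed.

Lemma wip_scal_l c F G : admissible F -> admissible G -> wip (jet_scal c F) G = c * wip F G.
Proof.
  intros. unfold wip, jet_scal. rewrite <- RInt_Rmult_l by now apply ex_RInt_wip.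
  apply RInt_ext_R; intros; ring.
Qed.

Lemma wip_scal_r c F G : admissible F -> admissible G -> wip F (jet_scal c G) = c * wip F G.
Proof. intros. rewrite wip_sym, wip_scal_l, wip_sym; auto. Qed.

Lemma wip_ge0 F : admissible F -> 0 <= wip F F.
Proof.
  intros HF. apply RInt_ge0; [lra | now apply ex_RInt_wip |].
  intros x _. apply Rmult_le_pos; [left; apply wt_pos | apply Rle_0_sqr].
Qed.

Lemma wip_lin_comb Y Z c d : admissible Y -> admissible Z ->
  wip (jet_add (jet_scal c Y) (jet_scal d Z)) (jet_add (jet_scal c Y) (jet_scal d Z)) =
  c ^ 2 * wip Y Y + 2 * c * d * wip Y Z + d ^ 2 * wip Z Z.
Proof.
  intros HY HZ.
  assert (HcY := admissible_scal c _ HY). assert (HdZ := admissible_scal d _ HZ).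
  rewrite wip_add_l, !wip_add_r, !wip_scal_l, !wip_scal_r, (wip_sym Z Y);
    auto using admissible_add.
  ring.
Qed.

Lemma wip_add_sqr X Y c : admissible X -> admissible Y ->
  wip (jet_add X (jet_scal c Y)) (jet_add X (jet_scal c Y)) =
  wip X X + 2 * c * wip X Y + c ^ 2 * wip Y Y.
Proof.
  intros HX HY.
  assert (E : jet_eq (jet_add X (jet_scal c Y)) (jet_add (jet_scal 1 X) (jet_scal c Y))).
  { intros j x. unfold jet_add, jet_scal. ring. }
  rewrite (wip_jet_eq _ _ _ _ E E), wip_lin_comb by auto. ring.
Qed.

Lemma wip_deriv_l F G : admissible F -> admissible G ->
  wip (jet_deriv F) G = - wip F (cderiv G).
Proof.
  intros HF HG. assert (HTG := admissible_cderiv G HG). assert (HSF := admissible_deriv F HF).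
  pose proof HF as [F1 [F2 _]]. pose proof HG as [G1 _].
  set (h x := wt x * (F 0%nat x * G 0%nat x)).
  assert (E : RInt (fun x => wt x * (jet_deriv F 0%nat x * G 0%nat x)
                            + wt x * (F 0%nat x * cderiv G 0%nat x)) (- K) K = 0).
  { apply (RInt_derivative_compact h).
    - intros x. unfold h.
      eapply derivable_pt_lim_ext; [intros; reflexivity|].
      assert (D := derivable_pt_lim_mult _ _ x _ _ (derivable_pt_lim_wt x)
                     (derivable_pt_lim_mult _ _ x _ _ (F1 0%nat x) (G1 0%nat x))).
      match goal with |- derivable_pt_lim _ _ ?l => replace l with
        (wt x * (2 * lam x) * (F 0%nat x * G 0%nat x)
         + wt x * (F 1%nat x * G 0%nat x + F 0%nat x * G 1%nat x)) end; [exact D|].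
      unfold jet_deriv, cderiv. simpl. ring.
    - apply continuity_plus; apply continuity_mult; try apply continuity_wt;
        apply continuity_mult; try apply (admissible_continuity _ _ HTG);
        apply (continuity_of_derivative _ _ (F1 _)) || apply (continuity_of_derivative _ _ (G1 _)).
    - unfold h. rewrite F2; [ring | rewrite Rabs_right; lra].
    - unfold h. rewrite F2; [ring | rewrite Rabs_left; lra]. }
  rewrite RInt_Rplus in E by now apply ex_RInt_wip.
  unfold wip. lra.
Qed.

Lemma wip_derivn_l n F G : admissible F -> admissible G ->
  wip (jet_derivn n F) G = (-1) ^ n * wip F (cderivn n G).
Proof.
  revert F G; induction n as [|n IH]; intros F G HF HG; simpl; [ring|].
  rewrite wip_deriv_l, IH, (wip_jet_eq F F _ _ (fun _ _ => eq_refl) (cderivn_cderiv n G));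
    auto using admissible_derivn, admissible_cderiv.
  ring.
Qed.

Lemma wip_deriv_derivn n F G : admissible F -> admissible G ->
  wip (jet_deriv G) (jet_derivn n F) =
  (-1) ^ n * (- wip (cderiv F) (cderivn n G) - 2 * a * INR n * wip F (cderivn (pred n) G)).
Proof.
  intros HF HG.
  assert (H1 := admissible_cderivn n G HG). assert (H2 := admissible_cderivn (pred n) G HG).
  rewrite wip_sym, wip_derivn_l by auto using admissible_deriv.
  rewrite (wip_jet_eq F F _ _ (fun _ _ => eq_refl) (cderivn_deriv n G)).
  rewrite wip_add_r, wip_scal_r, (wip_sym F (jet_deriv _)), wip_deriv_l, (wip_sym (cderivn n G));
    auto using admissible_deriv, admissible_scal.
  ring.
Qed.

Lemma wip_jet_lam F G : wip F (jet_lam G) = wip (jet_lam F) G.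
Proof. unfold wip, jet_lam. apply RInt_ext_R. intros. simpl INR. ring. Qed.

Lemma norm_deriv F : admissible F ->
  wip (jet_deriv F) (jet_deriv F) = wip (cderiv F) (cderiv F) + 2 * a * wip F F.
Proof.
  intros HF.
  assert (HS := admissible_deriv F HF). assert (HT := admissible_cderiv F HF).
  rewrite (wip_deriv_l F), (wip_jet_eq F F _ _ (fun _ _ => eq_refl) (cderiv_deriv F)),
    wip_add_r, wip_scal_r, (wip_sym F (jet_deriv _)), wip_deriv_l;
    auto using admissible_scal, admissible_deriv.
  ring.
Qed.

Lemma norm_cderivn_deriv k F : admissible F ->
  wip (cderivn k (jet_deriv F)) (cderivn k (jet_deriv F)) =
  wip (cderivn (S k) F) (cderivn (S k) F)
  + 2 * a * (1 + 2 * INR k) * wip (cderivn k F) (cderivn k F)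
  + 4 * a ^ 2 * INR k ^ 2 * wip (cderivn (pred k) F) (cderivn (pred k) F).
Proof.
  intros HF.
  assert (Hk := admissible_cderivn k F HF). assert (Hpk := admissible_cderivn (pred k) F HF).
  rewrite (wip_jet_eq _ _ _ _ (cderivn_deriv k F) (cderivn_deriv k F)),
    wip_add_sqr, norm_deriv, (wip_deriv_l (cderivn k F)); auto using admissible_deriv.
  destruct k; [simpl; ring|]. simpl pred. simpl cderivn. rewrite S_INR. ring.
Qed.

Section Positive.
Hypothesis Ha : 0 < a.

Lemma norm_derivn_ge k F : admissible F ->
  wip (jet_derivn (S k) F) (jet_derivn (S k) F) >=
  wip (cderivn (S k) F) (cderivn (S k) F)
  + 2 * a * INR (S k) ^ 2 * wip (cderivn k F) (cderivn k F).
Proof.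
  revert F; induction k as [|k IH]; intros F HF.
  - simpl jet_derivn. rewrite norm_deriv by auto. simpl. lra.
  - assert (E : jet_eq (jet_derivn (S (S k)) F) (jet_derivn (S k) (jet_deriv F))).
    { intros j x. rewrite !jet_derivn_eq. unfold jet_deriv. f_equal; lia. }
    rewrite (wip_jet_eq _ _ _ _ E E).
    specialize (IH (jet_deriv F) (admissible_deriv F HF)).
    rewrite (norm_cderivn_deriv (S k)) in IH by auto.
    assert (Hk := norm_cderivn_deriv k F HF).
    assert (n1 := wip_ge0 _ (admissible_cderivn (S (S k)) F HF)).
    assert (n2 := wip_ge0 _ (admissible_cderivn (S k) F HF)).
    assert (n3 := wip_ge0 _ (admissible_cderivn k F HF)).
    assert (n4 := wip_ge0 _ (admissible_cderivn (pred k) F HF)).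
    simpl pred in IH. rewrite !S_INR in *. assert (0 <= INR k) by apply pos_INR.
    set (A := wip (cderivn k (jet_deriv F)) (cderivn k (jet_deriv F))) in *.
    set (B := wip (cderivn (S k) F) (cderivn (S k) F)) in *.
    assert (HA : B <= A).
    { rewrite Hk.
      assert (0 <= 2 * a * (1 + 2 * INR k) * wip (cderivn k F) (cderivn k F))
        by (apply Rmult_le_pos; [nra | auto]).
      assert (0 <= 4 * a ^ 2 * INR k ^ 2 * wip (cderivn (pred k) F) (cderivn (pred k) F))
        by (apply Rmult_le_pos; [nra | auto]).
      lra. }
    assert (0 <= 4 * a ^ 2 * (INR k + 1) ^ 2 * wip (cderivn k F) (cderivn k F))
      by (apply Rmult_le_pos; [nra | auto]).
    assert (2 * a * (INR k + 1) ^ 2 * B <= 2 * a * (INR k + 1) ^ 2 * A)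
      by (apply Rmult_le_compat_l; [nra | auto]).
    nra.
Qed.

(* The Carleman mechanism: on the support, [|lam| >= a r]. *)
Lemma norm_jet_lam_ge F : 0 <= r -> admissible F ->
  wip (jet_lam F) (jet_lam F) >= a ^ 2 * r ^ 2 * wip F F.
Proof.
  intros Hr HF. assert (HL := admissible_jet_lam F HF).
  unfold wip. rewrite <- RInt_Rmult_l by now apply ex_RInt_wip.
  apply Rle_ge, RInt_le; [lra | apply (ex_RInt_scal (V := R_CompleteNormedModule)); now apply ex_RInt_wip
                              | now apply ex_RInt_wip |].
  intros x _. unfold jet_lam, lam. simpl INR.
  assert (Hw := wt_pos x).
  destruct (Rlt_or_le (Rabs (x + s)) r) as [Hlt|Hge].
  - destruct HF as [_ [_ H3]]. rewrite H3 by auto. nra.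
  - assert (r ^ 2 <= (x + s) ^ 2).
    { rewrite <- (pow2_abs (x + s)). apply pow_incr. lra. }
    assert (a ^ 2 * r ^ 2 * F 0%nat x ^ 2 <= a ^ 2 * (x + s) ^ 2 * F 0%nat x ^ 2)
      by (apply Rmult_le_compat_r; [apply pow2_ge_0 | nra]).
    nra.
Qed.

Lemma norm_cderiv_ge F : 0 <= r -> admissible F ->
  wip (cderiv F) (cderiv F) >= (a ^ 2 * r ^ 2 - a) * wip F F.
Proof.
  intros Hr HF.
  assert (HL := admissible_jet_lam F HF). assert (HS := admissible_deriv F HF).
  assert (E : jet_eq (cderiv F) (jet_add (jet_add (jet_deriv F) (jet_lam F)) (jet_scal 1 (jet_lam F)))).
  { intros j x; unfold cderiv, jet_add, jet_scal, jet_deriv, jet_lam. ring. }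
  assert (Ecross : 2 * wip (jet_deriv F) (jet_lam F)
                   = - a * wip F F - 2 * wip (jet_lam F) (jet_lam F)).
  { assert (E2 : jet_eq (cderiv (jet_lam F))
                   (jet_add (jet_add (jet_lam (jet_deriv F)) (jet_scal a F))
                            (jet_scal 2 (jet_lam (jet_lam F))))).
    { intros j x. unfold cderiv, jet_add, jet_scal, jet_lam, jet_deriv.
      destruct j; simpl pred; [simpl INR | rewrite !S_INR]; ring. }
    assert (Hibp := wip_deriv_l F (jet_lam F) HF HL).
    rewrite (wip_jet_eq F F _ _ (fun _ _ => eq_refl) E2), !wip_add_r, !wip_scal_r,
      (wip_jet_lam F (jet_deriv F)), (wip_sym (jet_lam F) (jet_deriv F)),
      (wip_jet_lam F (jet_lam F)) in Hibp;
      auto using admissible_jet_lam, admissible_deriv, admissible_scal, admissible_add.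
    lra. }
  rewrite (wip_jet_eq _ _ _ _ E E), wip_add_sqr, (wip_add_l (jet_deriv F) (jet_lam F) (jet_lam F)); auto using admissible_add.
  assert (NL := norm_jet_lam_ge F Hr HF).
  assert (N := wip_ge0 _ (admissible_add _ _ HS HL)).
  nra.
Qed.

Lemma norm_cderivn_ge k F : 0 <= r -> 0 <= a ^ 2 * r ^ 2 - a -> admissible F ->
  wip (cderivn k F) (cderivn k F) >= (a ^ 2 * r ^ 2 - a) ^ k * wip F F.
Proof.
  intros Hr Hrho HF. induction k as [|k IH]; [simpl; lra|].
  simpl cderivn. rewrite <- tech_pow_Rmult.
  assert (H := norm_cderiv_ge _ Hr (admissible_cderivn k F HF)).
  assert ((a ^ 2 * r ^ 2 - a) * ((a ^ 2 * r ^ 2 - a) ^ k * wip F F)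
          <= (a ^ 2 * r ^ 2 - a) * wip (cderivn k F) (cderivn k F))
    by (apply Rmult_le_compat_l; lra).
  rewrite Rmult_assoc. lra.
Qed.

(* For [f = Re u], [g = Im u], the components of [c d_x (Im u, - Re u) + sg d^n (Re u, Im u)] are
   [spatial c sg n f g] and [spatial (- c) sg n g f]; [cspatial] replaces [d/dx] by [T]. *)
Definition spatial (c sg : R) (n : nat) (f g : jet) : jet :=
  jet_add (jet_scal c (jet_deriv g)) (jet_scal sg (jet_derivn n f)).
Definition cspatial (c sg : R) (n : nat) (f g : jet) : jet :=
  jet_add (jet_scal c (cderiv g)) (jet_scal sg (cderivn n f)).
Definition spatial_gap (c sg : R) (n : nat) (f g : jet) : R :=
  wip (spatial c sg n f g) (spatial c sg n f g)
  - wip (cspatial c sg n f g) (cspatial c sg n f g)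
  + wip (spatial (- c) sg n g f) (spatial (- c) sg n g f)
  - wip (cspatial (- c) sg n g f) (cspatial (- c) sg n g f).

Lemma spatial_gap_expand c sg k f g : sg ^ 2 = 1 -> (-1) ^ S k = 1 ->
  admissible f -> admissible g ->
  spatial_gap c sg (S k) f g =
  2 * a * c ^ 2 * (wip f f + wip g g)
  + 4 * a * c * INR (S k) * sg * (wip g (cderivn k f) - wip f (cderivn k g))
  + (wip (jet_derivn (S k) f) (jet_derivn (S k) f) - wip (cderivn (S k) f) (cderivn (S k) f))
  + (wip (jet_derivn (S k) g) (jet_derivn (S k) g) - wip (cderivn (S k) g) (cderivn (S k) g)).
Proof.
  intros Hsg Hev Hf Hg. unfold spatial_gap, spatial, cspatial.
  rewrite !wip_lin_comb, (wip_deriv_derivn (S k) f g), (wip_deriv_derivn (S k) g f), !norm_deriv;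
    auto using admissible_deriv, admissible_derivn, admissible_cderiv, admissible_cderivn.
  rewrite Hev, Hsg, (wip_sym (cderiv g) (cderivn (S k) f)). simpl pred. ring.
Qed.

Lemma spatial_gap_ge c sg k f g : 0 <= r -> 0 <= a ^ 2 * r ^ 2 - a ->
  (a ^ 2 * r ^ 2 - a) ^ k >= 4 * c ^ 2 -> sg ^ 2 = 1 -> (-1) ^ S k = 1 ->
  admissible f -> admissible g ->
  spatial_gap c sg (S k) f g >= a / 2 * (a ^ 2 * r ^ 2 - a) ^ k * (wip f f + wip g g).
Proof.
  intros Hr Hrho Hc Hsg Hev Hf Hg.
  rewrite spatial_gap_expand by auto.
  set (rho := a ^ 2 * r ^ 2 - a) in *. set (n := INR (S k)).
  assert (Hn : 1 <= n) by (unfold n; rewrite S_INR; assert (0 <= INR k) by apply pos_INR; lra).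
  assert (Df := norm_derivn_ge k f Hf). assert (Dg := norm_derivn_ge k g Hg). fold n in Df, Dg.
  assert (Rf := norm_cderivn_ge k f Hr Hrho Hf). assert (Rg := norm_cderivn_ge k g Hr Hrho Hg).
  fold rho in Rf, Rg.
  set (Xf := cderivn k f) in *. set (Xg := cderivn k g) in *.
  assert (HXf : admissible Xf) by now apply admissible_cderivn.
  assert (HXg : admissible Xg) by now apply admissible_cderivn.
  (* completing the squares [|n Xf + 2 c sg g|^2 >= 0] and [|n Xg - 2 c sg f|^2 >= 0] *)
  assert (Sf := wip_ge0 _ (admissible_add _ _ (admissible_scal n _ HXf) (admissible_scal (2 * c * sg) _ Hg))).
  assert (Sg := wip_ge0 _ (admissible_add _ _ (admissible_scal n _ HXg) (admissible_scal (- (2 * c * sg)) _ Hf))).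
  rewrite wip_lin_comb in Sf, Sg by auto.
  rewrite (wip_sym Xf g) in Sf. rewrite (wip_sym Xg f) in Sg.
  assert (E4 : (2 * c * sg) ^ 2 = 4 * c ^ 2) by (rewrite Rpow_mult_distr, Hsg; ring).
  assert (E4' : (- (2 * c * sg)) ^ 2 = 4 * c ^ 2) by (rewrite <- E4; ring).
  rewrite E4 in Sf. rewrite E4' in Sg.
  assert (Nf := wip_ge0 f Hf). assert (Ng := wip_ge0 g Hg).
  assert (NXf := wip_ge0 Xf HXf). assert (NXg := wip_ge0 Xg HXg).
  assert (Hn2 : 1 <= n ^ 2) by nra.
  assert (Qf : rho ^ k * wip f f <= n ^ 2 * wip Xf Xf)
    by (assert (wip Xf Xf <= n ^ 2 * wip Xf Xf) by nra; lra).
  assert (Qg : rho ^ k * wip g g <= n ^ 2 * wip Xg Xg)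
    by (assert (wip Xg Xg <= n ^ 2 * wip Xg Xg) by nra; lra).
  assert (Hc2 : 0 <= c ^ 2) by nra.
  assert (Hsum : 2 * c ^ 2 * (wip f f + wip g g) <= rho ^ k / 2 * (wip f f + wip g g)) by nra.
  nra.
Qed.

End Positive.

(* For even [n] the weighted adjoint of [d^n/dx^n] is [T^n], so [skew n] is skew-adjoint. *)
Definition skew (n : nat) (F : jet) : jet := jet_add (jet_derivn n F) (jet_scal (-1) (cderivn n F)).

Lemma admissible_skew n F : admissible F -> admissible (skew n F).
Proof. intros. unfold skew. auto using admissible_add, admissible_derivn, admissible_scal, admissible_cderivn. Qed.

Lemma wip_skew n F G : (-1) ^ n = 1 -> admissible F -> admissible G ->
  wip F (skew n G) = - wip G (skew n F).
Proof.
  intros Hn HF HG. unfold skew.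
  rewrite !wip_add_r, !wip_scal_r, (wip_sym F (jet_derivn n G)), (wip_sym G (jet_derivn n F)),
    !wip_derivn_l; auto using admissible_derivn, admissible_scal, admissible_cderivn.
  rewrite Hn. ring.
Qed.

Lemma RInt_wip_sum4 A1 B1 A2 B2 A3 B3 A4 B4 :
  admissible A1 -> admissible B1 -> admissible A2 -> admissible B2 ->
  admissible A3 -> admissible B3 -> admissible A4 -> admissible B4 ->
  RInt (fun x => wt x * (A1 0%nat x * B1 0%nat x) + wt x * (A2 0%nat x * B2 0%nat x)
               + wt x * (A3 0%nat x * B3 0%nat x) + wt x * (A4 0%nat x * B4 0%nat x)) (- K) K
  = wip A1 B1 + wip A2 B2 + wip A3 B3 + wip A4 B4.
Proof.
  intros. unfold wip.
  assert (E1 := ex_RInt_wip A1 B1 ltac:(auto) ltac:(auto)).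
  assert (E2 := ex_RInt_wip A2 B2 ltac:(auto) ltac:(auto)).
  assert (E3 := ex_RInt_wip A3 B3 ltac:(auto) ltac:(auto)).
  assert (E4 := ex_RInt_wip A4 B4 ltac:(auto) ltac:(auto)).
  assert (E12 := ex_RInt_plus _ _ _ _ E1 E2). assert (E123 := ex_RInt_plus _ _ _ _ E12 E3).
  rewrite !RInt_Rplus by first [exact E1 | exact E2 | exact E3 | exact E4 | exact E12 | exact E123].
  reflexivity.
Qed.

End Admissible.
End Weight.

Section Strip.
(* [u = Ur 0 0 + i Ui 0 0]; the weight is [exp (a (x + sh 0 t)^2)], [sh n] being the
   [n]-th derivative of the shift, known only on [(0,1)]. *)
Variables (Ur Ui : nat -> nat -> R -> R -> R) (sh : nat -> R -> R) (a K t0 t1 r1 r2 : R).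
Hypothesis HUr : smooth_family Ur.
Hypothesis HUi : smooth_family Ui.
Hypothesis Hsh : forall n t, 0 < t < 1 -> derivable_pt_lim (sh n) t (sh (S n) t).
Hypothesis Ha : 0 < a.
Hypothesis HK : 0 < K.
Hypothesis Ht0 : 0 < t0.
Hypothesis Ht1 : t1 < 1.

Definition in_region (t x : R) :=
  t0 <= t <= t1 /\ Rabs x < K /\ r1 <= Rabs (x + sh 0%nat t) <= r2.

Hypothesis Hsupp : forall i j t x, (Ur i j t x <> 0 \/ Ui i j t x <> 0) -> in_region t x.

Definition weight t x := wt a (sh 0%nat t) x.
Definition lam_t t x := lam a (sh 0%nat t) x.

Definition ujet (U : nat -> nat -> R -> R -> R) t : jet := fun j x => U 0%nat j t x.
(* Jet of [(d_t - sh 1 t d_x) U]: the weight is constant along this field. *)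
Definition tjet (U : nat -> nat -> R -> R -> R) t : jet :=
  fun j x => U 1%nat j t x - sh 1%nat t * U 0%nat (S j) t x.

Definition vanishes_at t x := forall i j, Ur i j t x = 0 /\ Ui i j t x = 0.

Lemma vanishes_outside t x : ~ in_region t x -> vanishes_at t x.
Proof.
  intros H i j.
  destruct (Req_dec (Ur i j t x) 0), (Req_dec (Ui i j t x) 0); auto;
    exfalso; apply H; apply (Hsupp i j); auto.
Qed.

Lemma vanishes_t t x : t < t0 \/ t1 < t -> vanishes_at t x.
Proof. intros H. apply vanishes_outside. unfold in_region. lra. Qed.

Lemma vanishes_x t x : K <= Rabs x -> vanishes_at t x.
Proof. intros H. apply vanishes_outside. unfold in_region. lra. Qed.

Lemma vanishes_r t x : Rabs (x + sh 0%nat t) < r1 -> vanishes_at t x.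
Proof. intros H. apply vanishes_outside. unfold in_region. lra. Qed.

Lemma derivable_pt_lim_lam_t t x : 0 < t < 1 ->
  derivable_pt_lim (fun s => lam_t s x) t (a * sh 1%nat t).
Proof.
  intros Ht. unfold lam_t, lam. apply derivable_pt_lim_scal.
  replace (sh 1%nat t) with (0 + sh 1%nat t) by ring.
  apply derivable_pt_lim_plus; [apply derivable_pt_lim_const | now apply Hsh].
Qed.

Lemma derivable_pt_lim_weight_t t x : 0 < t < 1 ->
  derivable_pt_lim (fun s => weight s x) t (weight t x * (2 * lam_t t x * sh 1%nat t)).
Proof.
  intros Ht. unfold weight, wt, lam_t, lam.
  apply (derivable_pt_lim_exp_comp (fun s => a * (x + sh 0%nat s) ^ 2)).
  replace (2 * (a * (x + sh 0%nat t)) * sh 1%nat t)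
    with (a * (2 * (x + sh 0%nat t) * (0 + sh 1%nat t))) by ring.
  apply derivable_pt_lim_scal, (derivable_pt_lim_sqr (fun s => x + sh 0%nat s)).
  apply derivable_pt_lim_plus; [apply derivable_pt_lim_const | now apply Hsh].
Qed.

Section Component.
Variable U : nat -> nat -> R -> R -> R.
Hypothesis HU : smooth_family U.
Hypothesis HUv : forall i j t x, vanishes_at t x -> U i j t x = 0.

Lemma admissible_ujet t : admissible (sh 0%nat t) K r1 (ujet U t).
Proof.
  unfold ujet; repeat split; intros.
  - apply (proj1 (proj2 HU)).
  - now apply HUv, vanishes_x.
  - now apply HUv, vanishes_r.
Qed.

Lemma admissible_tjet t : admissible (sh 0%nat t) K r1 (tjet U t).
Proof.
  unfold tjet; repeat split; intros.
  - apply derivable_pt_lim_minus; [|apply derivable_pt_lim_scal]; apply (proj1 (proj2 HU)).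
  - rewrite !HUv by now apply vanishes_x. ring.
  - rewrite !HUv by now apply vanishes_r. ring.
Qed.

Lemma derivable_pt_lim_cderivn_t k j x t : 0 < t < 1 ->
  derivable_pt_lim (fun s => cderivn a (sh 0%nat s) k (ujet U s) j x) t
    (cderivn a (sh 0%nat t) k (tjet U t) j x + sh 1%nat t * cderivn a (sh 0%nat t) k (ujet U t) (S j) x).
Proof.
  intros Ht. revert j x. induction k as [|k IH]; intros j x.
  - simpl. unfold ujet, tjet.
    replace (U 1%nat j t x - sh 1%nat t * U 0%nat (S j) t x + sh 1%nat t * U 0%nat (S j) t x)
      with (U 1%nat j t x) by ring.
    apply (proj1 HU).
  - simpl cderivn. unfold cderiv at 1 2 3.
    assert (D := derivable_pt_lim_plus _ _ t _ _
                   (derivable_pt_lim_plus _ _ t _ _ (IH (S j) x)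
                      (derivable_pt_lim_mult _ _ t _ _
                         (derivable_pt_lim_scal _ 2 t _ (derivable_pt_lim_lam_t t x Ht)) (IH j x)))
                   (derivable_pt_lim_scal _ (2 * INR j * a) t _ (IH (pred j) x))).
    eapply derivable_pt_lim_ext; [intros; reflexivity|].
    match goal with |- derivable_pt_lim _ _ ?l => replace l with
      (cderivn a (sh 0%nat t) k (tjet U t) (S j) x + sh 1%nat t * cderivn a (sh 0%nat t) k (ujet U t) (S (S j)) x
       + (2 * (a * sh 1%nat t) * cderivn a (sh 0%nat t) k (ujet U t) j x
          + 2 * lam_t t x * (cderivn a (sh 0%nat t) k (tjet U t) j x
                             + sh 1%nat t * cderivn a (sh 0%nat t) k (ujet U t) (S j) x))
       + 2 * INR j * a * (cderivn a (sh 0%nat t) k (tjet U t) (pred j) x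
                          + sh 1%nat t * cderivn a (sh 0%nat t) k (ujet U t) (S (pred j)) x)) end;
      [exact D|].
    unfold cderiv, lam_t. destruct j; simpl pred; [simpl INR | rewrite !S_INR]; ring.
Qed.

Lemma continuity_2d_pt_U i j t x : continuity_2d_pt (fun t x => U i j t x) t x.
Proof. apply continuous2_of_cont2, (proj2 (proj2 HU)). Qed.

End Component.

Lemma Ur_vanishes i j t x : vanishes_at t x -> Ur i j t x = 0.
Proof. intros H. apply H. Qed.

Lemma Ui_vanishes i j t x : vanishes_at t x -> Ui i j t x = 0.
Proof. intros H. apply H. Qed.

Lemma continuity_2d_pt_sh n t x : 0 < t < 1 -> continuity_2d_pt (fun t _ => sh n t) t x.
Proof.
  intros Ht. apply continuity_2d_pt_of_t, derivable_continuous_pt.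
  exists (sh (S n) t). now apply Hsh.
Qed.

Lemma continuity_2d_pt_lam_t t x : 0 < t < 1 -> continuity_2d_pt lam_t t x.
Proof.
  intros Ht. unfold lam_t, lam.
  continuity_2d ltac:(apply continuity_2d_pt_sh; assumption).
Qed.

Lemma continuity_2d_pt_weight t x : 0 < t < 1 -> continuity_2d_pt weight t x.
Proof.
  intros Ht. unfold weight, wt.
  continuity_2d ltac:(apply continuity_2d_pt_sh; assumption).
Qed.

Lemma continuity_2d_pt_cderivn (F : R -> jet) k j t x : 0 < t < 1 ->
  (forall j, continuity_2d_pt (fun t x => F t j x) t x) ->
  continuity_2d_pt (fun t x => cderivn a (sh 0%nat t) k (F t) j x) t x.
Proof.
  intros Ht HF. revert j. induction k as [|k IH]; intros j; simpl; auto. unfold cderiv.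
  continuity_2d ltac:(first [ apply IH | apply (continuity_2d_pt_lam_t t x Ht) ]).
Qed.

Lemma continuity_2d_pt_tjet U j t x : smooth_family U -> 0 < t < 1 ->
  continuity_2d_pt (fun t x => tjet U t j x) t x.
Proof.
  intros HU Ht. unfold tjet.
  continuity_2d ltac:(first [ apply (continuity_2d_pt_U U HU)
                            | apply continuity_2d_pt_sh; assumption ]).
Qed.

Lemma continuous2_glue (F : R -> R -> R) :
  (forall t x, 0 < t < 1 -> continuity_2d_pt F t x) ->
  (forall t x, vanishes_at t x -> F t x = 0) -> continuous2 F.
Proof.
  intros H1 H2 t x.
  destruct (Rlt_or_le t t0) as [Hl|Hl]; [|destruct (Rlt_or_le t1 t) as [Hr|Hr]].
  - apply (continuity_2d_pt_ext_loc (fun _ _ => 0)); [|apply continuity_2d_pt_const].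
    assert (Hd : 0 < t0 - t) by lra. exists (mkposreal _ Hd). intros u v Hu _. simpl in Hu.
    symmetry; apply H2, vanishes_t. apply Rabs_def2 in Hu. lra.
  - apply (continuity_2d_pt_ext_loc (fun _ _ => 0)); [|apply continuity_2d_pt_const].
    assert (Hd : 0 < t - t1) by lra. exists (mkposreal _ Hd). intros u v Hu _. simpl in Hu.
    symmetry; apply H2, vanishes_t. apply Rabs_def2 in Hu. lra.
  - apply H1. lra.
Qed.

Lemma derivable_glue (H Ht : R -> R -> R) :
  (forall t x, 0 < t < 1 -> derivable_pt_lim (fun s => H s x) t (Ht t x)) ->
  (forall t x, vanishes_at t x -> H t x = 0 /\ Ht t x = 0) ->
  forall t x, derivable_pt_lim (fun s => H s x) t (Ht t x).
Proof.
  intros H1 H2 t x.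
  destruct (Rlt_or_le t t0) as [Hl|Hl]; [|destruct (Rlt_or_le t1 t) as [Hr|Hr]].
  - rewrite (proj2 (H2 t x (vanishes_t t x (or_introl Hl)))).
    apply (derivable_pt_lim_locally_zero _ t (t0 - t)); [lra|].
    intros u Hu. apply H2, vanishes_t. apply Rabs_def2 in Hu. lra.
  - rewrite (proj2 (H2 t x (vanishes_t t x (or_intror Hr)))).
    apply (derivable_pt_lim_locally_zero _ t (t - t1)); [lra|].
    intros u Hu. apply H2, vanishes_t. apply Rabs_def2 in Hu. lra.
  - apply H1. lra.
Qed.

Lemma cderivn_ujet_vanish U k j t x s : (forall i j, U i j t x = 0) ->
  cderivn a s k (ujet U t) j x = 0.
Proof. intros H. apply cderivn_zero. intros; apply H. Qed.

Lemma cderivn_tjet_vanish U k j t x s : (forall i j, U i j t x = 0) ->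
  cderivn a s k (tjet U t) j x = 0.
Proof. intros H. apply cderivn_zero. intros; unfold tjet. rewrite !H. ring. Qed.

Ltac vanish HZ := repeat first
  [ rewrite (Ur_vanishes _ _ _ _ HZ) | rewrite (Ui_vanishes _ _ _ _ HZ)
  | rewrite (cderivn_ujet_vanish Ur _ _ _ _ _ (fun i j => Ur_vanishes i j _ _ HZ))
  | rewrite (cderivn_ujet_vanish Ui _ _ _ _ _ (fun i j => Ui_vanishes i j _ _ HZ))
  | rewrite (cderivn_tjet_vanish Ur _ _ _ _ _ (fun i j => Ur_vanishes i j _ _ HZ))
  | rewrite (cderivn_tjet_vanish Ui _ _ _ _ _ (fun i j => Ui_vanishes i j _ _ HZ)) ].

Ltac continuity_strip := continuity_2d ltac:(first
  [ apply (continuity_2d_pt_U Ur HUr) | apply (continuity_2d_pt_U Ui HUi)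
  | apply continuity_2d_pt_weight; assumption | apply continuity_2d_pt_lam_t; assumption
  | apply continuity_2d_pt_sh; assumption
  | apply continuity_2d_pt_tjet; assumption
  | apply continuity_2d_pt_cderivn; [assumption | intros; apply (continuity_2d_pt_U Ur HUr)]
  | apply continuity_2d_pt_cderivn; [assumption | intros; apply (continuity_2d_pt_U Ui HUi)]
  | apply continuity_2d_pt_cderivn; [assumption | intros; apply continuity_2d_pt_tjet; assumption] ]).

Variable m : nat.
Hypothesis Hm : (1 <= m)%nat.

Definition deg := (2 * m)%nat.
Definition sgn := (-1) ^ m.

Lemma sgn_sqr : sgn ^ 2 = 1.
Proof. unfold sgn. rewrite <- pow_mult, Nat.mul_comm, pow_mult. replace ((-1) ^ 2) with 1 by ring. apply pow1. Qed.

Lemma deg_even : (-1) ^ deg = 1.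
Proof. unfold deg. rewrite pow_mult. replace ((-1) ^ 2) with 1 by ring. apply pow1. Qed.

Definition cjet (U : nat -> nat -> R -> R -> R) t k j x := cderivn a (sh 0%nat t) k (ujet U t) j x.
Definition abs2 t x := Ur 0%nat 0%nat t x ^ 2 + Ui 0%nat 0%nat t x ^ 2.
Definition mass_integrand t x := weight t x * abs2 t x.
Definition lhs_integrand t x := weight t x *
  ((Ui 1%nat 0%nat t x + sgn * Ur 0%nat deg t x) ^ 2 + (- Ur 1%nat 0%nat t x + sgn * Ui 0%nat deg t x) ^ 2).

(* Values at [x] of [spatial] and [cspatial] for [c = sh 1 t], [f = Re u], [g = Im u]. *)
Definition spatial_re t x := sh 1%nat t * Ui 0%nat 1%nat t x + sgn * Ur 0%nat deg t x.
Definition spatial_im t x := - sh 1%nat t * Ur 0%nat 1%nat t x + sgn * Ui 0%nat deg t x.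
Definition cspatial_re t x := sh 1%nat t * cderiv a (sh 0%nat t) (ujet Ui t) 0%nat x + sgn * cjet Ur t deg 0%nat x.
Definition cspatial_im t x := - sh 1%nat t * cderiv a (sh 0%nat t) (ujet Ur t) 0%nat x + sgn * cjet Ui t deg 0%nat x.
Definition gap_integrand t x :=
  weight t x * (spatial_re t x ^ 2 - cspatial_re t x ^ 2 + spatial_im t x ^ 2 - cspatial_im t x ^ 2).

Definition skew_re t x := Ur 0%nat deg t x - cjet Ur t deg 0%nat x.
Definition skew_im t x := Ui 0%nat deg t x - cjet Ui t deg 0%nat x.
Definition tskew_re t x := tjet Ur t deg x - cderivn a (sh 0%nat t) deg (tjet Ur t) 0%nat x.
Definition tskew_im t x := tjet Ui t deg x - cderivn a (sh 0%nat t) deg (tjet Ui t) 0%nat x.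
Definition skew_integrand t x := weight t x *
  (tjet Ui t 0%nat x * skew_re t x - tjet Ur t 0%nat x * skew_im t x
   - Ui 0%nat 0%nat t x * tskew_re t x + Ur 0%nat 0%nat t x * tskew_im t x).

Definition drift_error t x := 2 * sh 2%nat t * lam_t t x * weight t x * abs2 t x.

Definition flux t x :=
  -2 * (sh 1%nat t * lam_t t x * weight t x * abs2 t x)
  + sgn * (weight t x * (Ui 0%nat 0%nat t x * skew_re t x - Ur 0%nat 0%nat t x * skew_im t x)).
Definition skew_re_dt t x := Ur 1%nat deg t x - (cderivn a (sh 0%nat t) deg (tjet Ur t) 0%nat x + sh 1%nat t * cjet Ur t deg 1%nat x).
Definition skew_im_dt t x := Ui 1%nat deg t x - (cderivn a (sh 0%nat t) deg (tjet Ui t) 0%nat x + sh 1%nat t * cjet Ui t deg 1%nat x).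
Definition skew_re_dx t x := Ur 0%nat (S deg) t x - cjet Ur t deg 1%nat x.
Definition skew_im_dx t x := Ui 0%nat (S deg) t x - cjet Ui t deg 1%nat x.
Definition flux_dt t x :=
  -2 * (sh 2%nat t * lam_t t x * weight t x * abs2 t x + sh 1%nat t * (a * sh 1%nat t) * weight t x * abs2 t x
        + sh 1%nat t * lam_t t x * (weight t x * (2 * lam_t t x * sh 1%nat t)) * abs2 t x
        + sh 1%nat t * lam_t t x * weight t x
          * (2 * (Ur 0%nat 0%nat t x * Ur 1%nat 0%nat t x + Ui 0%nat 0%nat t x * Ui 1%nat 0%nat t x)))
  + sgn * (weight t x * (2 * lam_t t x * sh 1%nat t) * (Ui 0%nat 0%nat t x * skew_re t x - Ur 0%nat 0%nat t x * skew_im t x)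
           + weight t x * (Ui 1%nat 0%nat t x * skew_re t x + Ui 0%nat 0%nat t x * skew_re_dt t x
                           - Ur 1%nat 0%nat t x * skew_im t x - Ur 0%nat 0%nat t x * skew_im_dt t x)).
Definition flux_dx t x :=
  -2 * (sh 1%nat t * a * weight t x * abs2 t x
        + sh 1%nat t * lam_t t x * (weight t x * (2 * lam_t t x)) * abs2 t x
        + sh 1%nat t * lam_t t x * weight t x
          * (2 * (Ur 0%nat 0%nat t x * Ur 0%nat 1%nat t x + Ui 0%nat 0%nat t x * Ui 0%nat 1%nat t x)))
  + sgn * (weight t x * (2 * lam_t t x) * (Ui 0%nat 0%nat t x * skew_re t x - Ur 0%nat 0%nat t x * skew_im t x)
           + weight t x * (Ui 0%nat 1%nat t x * skew_re t x + Ui 0%nat 0%nat t x * skew_re_dx t x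
                           - Ur 0%nat 1%nat t x * skew_im t x - Ur 0%nat 0%nat t x * skew_im_dx t x)).
Definition transport_flux t x := flux_dt t x - sh 1%nat t * flux_dx t x.

Definition lower_integrand t x :=
  gap_integrand t x + drift_error t x + transport_flux t x + sgn * skew_integrand t x.

(* Writing [d_t = X + sh1 d_x], the cross terms of [lhs_integrand] are exactly the flux,
   the error and the skew term; what is left is a weighted sum of squares. *)
Lemma lhs_integrand_decomp t x :
  lhs_integrand t x - lower_integrand t x =
  weight t x * ((tjet Ui t 0%nat x + cspatial_re t x) ^ 2 + (- tjet Ur t 0%nat x + cspatial_im t x) ^ 2).
Proof.
  unfold lhs_integrand, lower_integrand, gap_integrand, transport_flux, flux_dt, flux_dx,
    drift_error, skew_integrand, spatial_re, spatial_im, cspatial_re, cspatial_im, abs2,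
    skew_re, skew_im, tskew_re, tskew_im, skew_re_dt, skew_im_dt, skew_re_dx, skew_im_dx, cjet.
  unfold tjet, cderiv, ujet, lam_t. simpl pred. simpl INR. ring.
Qed.

Lemma lhs_integrand_ge t x : lower_integrand t x <= lhs_integrand t x.
Proof.
  assert (E := lhs_integrand_decomp t x).
  assert (0 < weight t x) by apply wt_pos.
  assert (0 <= (tjet Ui t 0%nat x + cspatial_re t x) ^ 2 + (- tjet Ur t 0%nat x + cspatial_im t x) ^ 2)
    by (apply Rplus_le_le_0_compat; apply pow2_ge_0).
  nra.
Qed.

Lemma derivable_pt_lim_abs2_t t x :
  derivable_pt_lim (fun s => abs2 s x) t
    (2 * (Ur 0%nat 0%nat t x * Ur 1%nat 0%nat t x + Ui 0%nat 0%nat t x * Ui 1%nat 0%nat t x)).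
Proof.
  unfold abs2. refine (derivable_pt_lim_value _ _ _ _ _ (derivable_pt_lim_plus _ _ t _ _
    (derivable_pt_lim_sqr _ t _ (proj1 HUr 0%nat 0%nat t x))
    (derivable_pt_lim_sqr _ t _ (proj1 HUi 0%nat 0%nat t x)))). ring.
Qed.

Lemma derivable_pt_lim_abs2_x t x :
  derivable_pt_lim (abs2 t) x
    (2 * (Ur 0%nat 0%nat t x * Ur 0%nat 1%nat t x + Ui 0%nat 0%nat t x * Ui 0%nat 1%nat t x)).
Proof.
  unfold abs2. refine (derivable_pt_lim_value _ _ _ _ _ (derivable_pt_lim_plus _ _ x _ _
    (derivable_pt_lim_sqr _ x _ (proj1 (proj2 HUr) 0%nat 0%nat t x))
    (derivable_pt_lim_sqr _ x _ (proj1 (proj2 HUi) 0%nat 0%nat t x)))). ring.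
Qed.

Lemma derivable_pt_lim_flux_t t x : derivable_pt_lim (fun s => flux s x) t (flux_dt t x).
Proof.
  revert t x. apply derivable_glue.
  - intros t x Ht.
    assert (Dsh := Hsh 1%nat t Ht).
    assert (Dw := derivable_pt_lim_weight_t t x Ht).
    assert (Dlam := derivable_pt_lim_mult _ _ t _ _ Dsh (derivable_pt_lim_lam_t t x Ht)).
    assert (D1 := derivable_pt_lim_mult _ _ t _ _ (derivable_pt_lim_mult _ _ t _ _ Dlam Dw)
                    (derivable_pt_lim_abs2_t t x)).
    assert (Dre := derivable_pt_lim_minus _ _ t _ _ (proj1 HUr 0%nat deg t x)
                     (derivable_pt_lim_cderivn_t Ur HUr deg 0%nat x t Ht)).
    assert (Dim := derivable_pt_lim_minus _ _ t _ _ (proj1 HUi 0%nat deg t x)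
                     (derivable_pt_lim_cderivn_t Ui HUi deg 0%nat x t Ht)).
    assert (D2 := derivable_pt_lim_mult _ _ t _ _ Dw (derivable_pt_lim_minus _ _ t _ _
                    (derivable_pt_lim_mult _ _ t _ _ (proj1 HUi 0%nat 0%nat t x) Dre)
                    (derivable_pt_lim_mult _ _ t _ _ (proj1 HUr 0%nat 0%nat t x) Dim))).
    refine (derivable_pt_lim_value _ _ _ _ _ (derivable_pt_lim_plus _ _ t _ _
      (derivable_pt_lim_scal _ (-2) t _ D1) (derivable_pt_lim_scal _ sgn t _ D2))).
    unfold flux_dt, skew_re, skew_im, skew_re_dt, skew_im_dt, cjet, mult_fct, minus_fct. ring.
  - intros t x HZ.
    unfold flux, flux_dt, skew_re, skew_im, skew_re_dt, skew_im_dt, cjet, abs2. vanish HZ.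
    split; ring.
Qed.

Lemma derivable_pt_lim_flux_x t x : derivable_pt_lim (flux t) x (flux_dx t x).
Proof.
  assert (Dw := derivable_pt_lim_wt a (sh 0%nat t) x). fold (weight t x) in Dw.
  assert (Dlam := derivable_pt_lim_scal _ (sh 1%nat t) x _ (derivable_pt_lim_lam a (sh 0%nat t) x)).
  assert (D1 := derivable_pt_lim_mult _ _ x _ _ (derivable_pt_lim_mult _ _ x _ _ Dlam Dw)
                  (derivable_pt_lim_abs2_x t x)).
  assert (Dre := derivable_pt_lim_minus _ _ x _ _ (proj1 (proj2 HUr) 0%nat deg t x)
                   (proj1 (admissible_cderivn a _ _ _ deg _ (admissible_ujet Ur HUr Ur_vanishes t)) 0%nat x)).
  assert (Dim := derivable_pt_lim_minus _ _ x _ _ (proj1 (proj2 HUi) 0%nat deg t x)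
                   (proj1 (admissible_cderivn a _ _ _ deg _ (admissible_ujet Ui HUi Ui_vanishes t)) 0%nat x)).
  assert (D2 := derivable_pt_lim_mult _ _ x _ _ Dw (derivable_pt_lim_minus _ _ x _ _
                  (derivable_pt_lim_mult _ _ x _ _ (proj1 (proj2 HUi) 0%nat 0%nat t x) Dre)
                  (derivable_pt_lim_mult _ _ x _ _ (proj1 (proj2 HUr) 0%nat 0%nat t x) Dim))).
  refine (derivable_pt_lim_value _ _ _ _ _ (derivable_pt_lim_plus _ _ x _ _
    (derivable_pt_lim_scal _ (-2) x _ D1) (derivable_pt_lim_scal _ sgn x _ D2))).
  unfold flux_dx, skew_re, skew_im, skew_re_dx, skew_im_dx, cjet, lam_t, weight, mult_real_fct, mult_fct, minus_fct. ring.
Qed.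

Ltac glue := apply continuous2_glue;
  [ intros t x Ht; continuity_strip
  | intros t x HZ; vanish HZ; ring ].

Lemma continuous2_lhs : continuous2 lhs_integrand.
Proof. unfold lhs_integrand. glue. Qed.

Lemma continuous2_mass : continuous2 mass_integrand.
Proof. unfold mass_integrand, abs2. glue. Qed.

Lemma continuous2_gap : continuous2 gap_integrand.
Proof. unfold gap_integrand, spatial_re, spatial_im, cspatial_re, cspatial_im, cjet, cderiv, ujet. glue. Qed.

Lemma continuous2_drift_error : continuous2 drift_error.
Proof. unfold drift_error, abs2. glue. Qed.

Lemma continuous2_skew : continuous2 skew_integrand.
Proof. unfold skew_integrand, skew_re, skew_im, tskew_re, tskew_im, cjet, tjet. glue. Qed.

Lemma continuous2_flux_dt : continuous2 flux_dt.
Proof. unfold flux_dt, skew_re, skew_im, skew_re_dt, skew_im_dt, abs2, cjet. glue. Qed.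

Lemma continuous2_flux_dx : continuous2 flux_dx.
Proof. unfold flux_dx, skew_re, skew_im, skew_re_dx, skew_im_dx, abs2, cjet. glue. Qed.

Lemma continuous2_transport_flux : continuous2 transport_flux.
Proof.
  unfold transport_flux. apply continuous2_glue.
  - intros t x Ht. continuity_2d ltac:(first
      [ apply continuous2_flux_dt | apply continuous2_flux_dx | apply continuity_2d_pt_sh; assumption ]).
  - intros t x HZ.
    unfold flux_dt, flux_dx, skew_re, skew_im, skew_re_dt, skew_im_dt, skew_re_dx, skew_im_dx, abs2, cjet.
    vanish HZ. ring.
Qed.

Lemma continuous2_lower : continuous2 lower_integrand.
Proof.
  intros t x. unfold lower_integrand. continuity_2d ltac:(first
    [ apply continuous2_gap | apply continuous2_drift_error
    | apply continuous2_transport_flux | apply continuous2_skew ]).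
Qed.

Lemma RInt2_transport_flux : RInt2 K transport_flux = 0.
Proof.
  apply (RInt2_transport_derivative K HK flux flux_dt flux_dx (sh 1%nat)).
  - apply derivable_pt_lim_flux_t.
  - apply derivable_pt_lim_flux_x.
  - apply continuous2_flux_dt.
  - apply continuous2_flux_dx.
  - intros t x Hx. assert (HZ := vanishes_x t x Hx).
    unfold flux, skew_re, skew_im, abs2, cjet. vanish HZ. ring.
  - intros x. assert (HZ := vanishes_t 0 x (or_introl Ht0)).
    unfold flux, skew_re, skew_im, abs2, cjet. vanish HZ. ring.
  - intros x. assert (HZ := vanishes_t 1 x (or_intror Ht1)).
    unfold flux, skew_re, skew_im, abs2, cjet. vanish HZ. ring.
Qed.

Section Slice.
Variable t : R.

Let F := ujet Ur t.
Let G := ujet Ui t.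
Let XF := tjet Ur t.
Let XG := tjet Ui t.
Let s := sh 0%nat t.

Let HF : admissible s K r1 F := admissible_ujet Ur HUr Ur_vanishes t.
Let HG : admissible s K r1 G := admissible_ujet Ui HUi Ui_vanishes t.
Let HXF : admissible s K r1 XF := admissible_tjet Ur HUr Ur_vanishes t.
Let HXG : admissible s K r1 XG := admissible_tjet Ui HUi Ui_vanishes t.

Lemma RInt_mass_integrand : RInt (mass_integrand t) (- K) K = wip a s K F F + wip a s K G G.
Proof.
  unfold wip. rewrite <- RInt_Rplus by now apply (ex_RInt_wip a s K r1).
  apply RInt_ext_R. intros x _. unfold mass_integrand, abs2, weight, F, G, ujet, s. ring.
Qed.

Lemma RInt_gap_integrand :
  RInt (gap_integrand t) (- K) K = spatial_gap a s K (sh 1%nat t) sgn deg F G.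
Proof.
  set (c := sh 1%nat t).
  assert (Hsp : forall c f g, admissible s K r1 f -> admissible s K r1 g ->
                  admissible s K r1 (spatial c sgn deg f g)).
  { intros. unfold spatial. auto using admissible_add, admissible_scal, admissible_deriv, admissible_derivn. }
  assert (Hcsp : forall c f g, admissible s K r1 f -> admissible s K r1 g ->
                   admissible s K r1 (cspatial a s c sgn deg f g)).
  { intros. unfold cspatial. auto using admissible_add, admissible_scal, admissible_cderiv, admissible_cderivn. }
  set (P := spatial c sgn deg F G). set (Q := cspatial a s c sgn deg F G).
  set (P' := spatial (- c) sgn deg G F). set (Q' := cspatial a s (- c) sgn deg G F).
  assert (E : spatial_gap a s K c sgn deg F G = wip a s K P P + wip a s K (jet_scal (-1) Q) Q
                + wip a s K P' P' + wip a s K (jet_scal (-1) Q') Q').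
  { unfold spatial_gap. fold P Q P' Q'.
    rewrite !(wip_scal_l a s K r1) by (unfold P, Q, P', Q'; auto). ring. }
  rewrite E, <- (RInt_wip_sum4 a s K r1) by (unfold P, Q, P', Q'; auto using admissible_scal).
  apply RInt_ext_R. intros x _.
  unfold gap_integrand, spatial_re, spatial_im, cspatial_re, cspatial_im, cjet, weight, P, Q, P', Q',
    spatial, cspatial, jet_add, jet_scal, jet_deriv, F, G, ujet, s, c.
  rewrite !jet_derivn_eq, Nat.add_0_r. ring.
Qed.

Lemma RInt_skew_integrand : RInt (skew_integrand t) (- K) K = 0.
Proof.
  assert (HSK : forall H, admissible s K r1 H -> admissible s K r1 (skew a s deg H))
    by (intros; now apply admissible_skew).
  assert (E : wip a s K XG (skew a s deg F) + wip a s K (jet_scal (-1) XF) (skew a s deg G)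
              + wip a s K (jet_scal (-1) G) (skew a s deg XF) + wip a s K F (skew a s deg XG) = 0).
  { rewrite !(wip_scal_l a s K r1), (wip_skew a s K r1 HK deg XG F), (wip_skew a s K r1 HK deg XF G)
      by auto using deg_even.
    ring. }
  rewrite <- E, <- (RInt_wip_sum4 a s K r1) by auto using admissible_scal.
  apply RInt_ext_R. intros x _.
  unfold skew_integrand, skew_re, skew_im, tskew_re, tskew_im, cjet, weight, skew,
    jet_add, jet_scal, XF, XG, F, G, ujet, s.
  rewrite !jet_derivn_eq, Nat.add_0_r. ring.
Qed.

End Slice.

Lemma abs2_region t x : abs2 t x = 0 \/ in_region t x.
Proof.
  destruct (Req_dec (Ur 0%nat 0%nat t x) 0) as [E1|E1];
    [destruct (Req_dec (Ui 0%nat 0%nat t x) 0) as [E2|E2]|].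
  - left. unfold abs2. rewrite E1, E2. ring.
  - right. apply (Hsupp 0 0). auto.
  - right. apply (Hsupp 0 0). auto.
Qed.

Lemma continuous2_gap_drift : continuous2 (fun t x => gap_integrand t x + drift_error t x).
Proof. intros t x. continuity_2d ltac:(first [apply continuous2_gap | apply continuous2_drift_error]). Qed.

(* The transport and skew terms of [lower_integrand] integrate to zero. *)
Lemma RInt2_lower_integrand :
  RInt2 K lower_integrand = RInt2 K (fun t x => gap_integrand t x + drift_error t x).
Proof.
  assert (Hgdt : continuous2 (fun t x => gap_integrand t x + drift_error t x + transport_flux t x)).
  { intros t x. continuity_2d ltac:(first [apply continuous2_gap_drift | apply continuous2_transport_flux]). }
  assert (Hs : continuous2 (fun t x => sgn * skew_integrand t x)).
  { intros t x. continuity_2d ltac:(apply continuous2_skew). }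
  assert (Hskew : RInt2 K skew_integrand = 0).
  { unfold RInt2. rewrite RInt_eq0; [easy|]. intros t _. apply RInt_skew_integrand. }
  unfold lower_integrand.
  rewrite (RInt2_plus K HK _ _ Hgdt Hs), (RInt2_plus K HK _ _ continuous2_gap_drift continuous2_transport_flux),
    (RInt2_scal K HK _ _ continuous2_skew), RInt2_transport_flux, Hskew.
  ring.
Qed.

Section Estimate.
Variable M : R.
Hypothesis HM : forall t, 0 < t < 1 -> Rabs (sh 2%nat t) <= M.
Hypothesis Hr1 : 0 <= r1.
Hypothesis Hrho : 0 <= a ^ 2 * r1 ^ 2 - a.
Hypothesis Hrho_drift : forall t, 0 < t < 1 -> 4 * sh 1%nat t ^ 2 <= (a ^ 2 * r1 ^ 2 - a) ^ (2 * m - 1).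

Lemma drift_error_ge t x : 0 < t < 1 -> - (2 * M * (a * r2)) * mass_integrand t x <= drift_error t x.
Proof.
  intros Ht. unfold drift_error, mass_integrand.
  assert (HW := wt_pos a (sh 0%nat t) x). fold (weight t x) in HW.
  assert (Hu : 0 <= abs2 t x) by (unfold abs2; apply Rplus_le_le_0_compat; apply pow2_ge_0).
  destruct (abs2_region t x) as [E|[_ [_ Hr]]]; [rewrite E; lra|].
  assert (Hl : Rabs (lam_t t x) <= a * r2).
  { unfold lam_t, lam. rewrite Rabs_mult, (Rabs_right a) by lra. apply Rmult_le_compat_l; lra. }
  assert (Hp : Rabs (sh 2%nat t * lam_t t x) <= M * (a * r2)).
  { rewrite Rabs_mult. apply Rmult_le_compat; auto using Rabs_pos. }
  apply Rabs_le_between in Hp.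
  assert (0 <= weight t x * abs2 t x) by (apply Rmult_le_pos; lra).
  nra.
Qed.

Lemma RInt_gap_drift_ge t : 0 < t < 1 ->
  (a / 2 * (a ^ 2 * r1 ^ 2 - a) ^ (2 * m - 1) - 2 * M * (a * r2)) * RInt (mass_integrand t) (- K) K
  <= RInt (fun x => gap_integrand t x + drift_error t x) (- K) K.
Proof.
  intros Ht.
  assert (Hmass := ex_RInt_continuity _ (- K) K (continuous2_slice _ t continuous2_mass)).
  rewrite RInt_Rplus, RInt_gap_integrand
    by (apply ex_RInt_continuity, continuous2_slice; auto using continuous2_gap, continuous2_drift_error).
  assert (Hgap := spatial_gap_ge a (sh 0%nat t) K r1 HK Ha (sh 1%nat t) sgn (2 * m - 1)
                    (ujet Ur t) (ujet Ui t) Hr1 Hrho (Rle_ge _ _ (Hrho_drift t Ht)) sgn_sqr).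
  replace (S (2 * m - 1)) with deg in Hgap by (unfold deg; lia).
  specialize (Hgap deg_even (admissible_ujet Ur HUr Ur_vanishes t) (admissible_ujet Ui HUi Ui_vanishes t)).
  assert (Herr : - (2 * M * (a * r2)) * RInt (mass_integrand t) (- K) K <= RInt (drift_error t) (- K) K).
  { rewrite <- RInt_Rmult_l by exact Hmass.
    apply RInt_le; [lra | now apply (ex_RInt_scal (V := R_CompleteNormedModule)) | |].
    - apply ex_RInt_continuity, continuous2_slice, continuous2_drift_error.
    - intros x _. now apply drift_error_ge. }
  rewrite RInt_mass_integrand in *. lra.
Qed.

Lemma RInt2_lhs_ge :
  (a / 2 * (a ^ 2 * r1 ^ 2 - a) ^ (2 * m - 1) - 2 * M * (a * r2)) * RInt2 K mass_integrand
  <= RInt2 K lhs_integrand.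
Proof.
  rewrite <- (RInt2_scal K HK _ _ continuous2_mass).
  apply Rle_trans with (RInt2 K lower_integrand).
  - rewrite RInt2_lower_integrand.
    apply (RInt2_le_inner K HK); [| apply continuous2_gap_drift |].
    + intros t x. continuity_2d ltac:(apply continuous2_mass).
    + intros t Ht. rewrite RInt_Rmult_l by apply ex_RInt_continuity, continuous2_slice, continuous2_mass.
      now apply RInt_gap_drift_ge.
  - apply RInt2_le; auto using continuous2_lower, continuous2_lhs.
    intros; apply lhs_integrand_ge.
Qed.

End Estimate.

End Strip.

Lemma deriv_within01_interior f t l : 0 < t < 1 -> deriv_within01 f t l -> derivable_pt_lim f t l.
Proof.
  intros Ht H eps Heps. destruct (H eps Heps) as [alp [Ha Hx]].
  assert (Hd : 0 < Rmin alp (Rmin t (1 - t))) by (repeat apply Rmin_pos; lra).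
  exists (mkposreal _ Hd). intros h Hh0 Hh. simpl in Hh.
  assert (h1 := Rmin_l alp (Rmin t (1 - t))). assert (h2 := Rmin_r alp (Rmin t (1 - t))).
  assert (h3 := Rmin_l t (1 - t)). assert (h4 := Rmin_r t (1 - t)).
  apply Rabs_def2 in Hh.
  specialize (Hx (t + h)). simpl in Hx. unfold R_dist in Hx.
  replace (t + h - t) with h in Hx by ring. apply Hx. split; [split; [lra|] |].
  - intro E. apply Hh0. lra.
  - destruct (Rcase_abs h); [rewrite Rabs_left | rewrite Rabs_right]; lra.
Qed.

Lemma deriv_within01_continuous f x l : deriv_within01 f x l ->
  forall eps, 0 < eps -> exists d, 0 < d /\
    forall y, 0 <= y <= 1 -> Rabs (y - x) < d -> Rabs (f y - f x) < eps.
Proof.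
  intros H eps Heps. destruct (H 1 ltac:(lra)) as [alp [Ha Hy]].
  assert (Hl : 0 < Rabs l + 1) by (assert (0 <= Rabs l) by apply Rabs_pos; lra).
  exists (Rmin alp (eps / (Rabs l + 1))). split; [apply Rmin_pos; [lra | apply Rdiv_lt_0_compat; lra]|].
  intros y Hy01 Hyx. destruct (Req_dec y x) as [<-|E]; [rewrite Rminus_eq_0, Rabs_R0; lra|].
  assert (h1 := Rmin_l alp (eps / (Rabs l + 1))). assert (h2 := Rmin_r alp (eps / (Rabs l + 1))).
  specialize (Hy y). simpl in Hy. unfold R_dist in Hy.
  assert (Hq : Rabs ((f y - f x) / (y - x) - l) < 1) by (apply Hy; split; [split; auto|]; lra).
  assert (Hq2 : Rabs ((f y - f x) / (y - x)) < Rabs l + 1).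
  { assert (T := Rabs_triang ((f y - f x) / (y - x) - l) l).
    replace ((f y - f x) / (y - x) - l + l) with ((f y - f x) / (y - x)) in T by ring. lra. }
  replace (f y - f x) with ((f y - f x) / (y - x) * (y - x)) by (field; lra).
  rewrite Rabs_mult.
  assert (0 < Rabs (y - x)) by (apply Rabs_pos_lt; lra).
  apply Rle_lt_trans with ((Rabs l + 1) * Rabs (y - x)); [apply Rmult_le_compat_r; lra|].
  apply Rlt_le_trans with ((Rabs l + 1) * (eps / (Rabs l + 1))); [apply Rmult_lt_compat_l; lra|].
  right; field; lra.
Qed.

Definition clamp01 t := Rmax 0 (Rmin t 1).

Lemma clamp01_range t : 0 <= clamp01 t <= 1.
Proof. unfold clamp01, Rmax, Rmin. repeat destruct Rle_dec; lra. Qed.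

Lemma clamp01_id t : 0 <= t <= 1 -> clamp01 t = t.
Proof. intros. unfold clamp01, Rmax, Rmin. repeat destruct Rle_dec; lra. Qed.

Lemma clamp01_lipschitz y c : Rabs (clamp01 y - clamp01 c) <= Rabs (y - c).
Proof. unfold clamp01, Rmax, Rmin. repeat destruct Rle_dec; unfold Rabs; repeat destruct Rcase_abs; lra. Qed.

(* [f o clamp01] is continuous on the whole line, so it is bounded on [0,1]. *)
Lemma deriv_within01_bounded f (f' : R -> R) :
  (forall x, 0 <= x <= 1 -> deriv_within01 f x (f' x)) ->
  exists M, 0 <= M /\ forall t, 0 <= t <= 1 -> Rabs (f t) <= M.
Proof.
  intros H.
  assert (Hc : forall c, continuity_pt (fun t => Rabs (f (clamp01 t))) c).
  { intros c. apply (continuity_pt_comp (fun t => f (clamp01 t)) Rabs); [|apply Rcontinuity_abs].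
    intros eps Heps.
    destruct (deriv_within01_continuous f (clamp01 c) _ (H _ (clamp01_range c)) eps Heps) as [d [Hd Hd2]].
    exists d. split; [lra|]. intros y [_ Hy]. simpl in *. unfold R_dist in *.
    apply Hd2; [apply clamp01_range|]. assert (T := clamp01_lipschitz y c). lra. }
  destruct (continuity_ab_maj _ 0 1 ltac:(lra) (fun c _ => Hc c)) as [Mx [HM _]].
  exists (Rabs (f (clamp01 Mx))). split; [apply Rabs_pos|].
  intros t Ht. rewrite <- (clamp01_id t Ht). now apply HM.
Qed.

Lemma not_in_supp ur ui t x : ~ in_supp ur ui t x ->
  exists eps, eps > 0 /\ forall t' x', Rabs (t' - t) < eps -> Rabs (x' - x) < eps ->
    ur t' x' = 0 /\ ui t' x' = 0.
Proof.
  intros H. apply not_all_ex_not in H. destruct H as [eps H].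
  apply imply_to_and in H. destruct H as [He H]. exists eps. split; auto.
  intros t' x' H1 H2. destruct (Req_dec (ur t' x') 0), (Req_dec (ui t' x') 0); auto;
    exfalso; apply H; exists t', x'; auto.
Qed.

Lemma smooth_family_locally_zero (D : nat -> nat -> R -> R -> R) t x eps :
  smooth_family D ->
  (forall t' x', Rabs (t' - t) < eps -> Rabs (x' - x) < eps -> D 0%nat 0%nat t' x' = 0) ->
  forall i j t' x', Rabs (t' - t) < eps -> Rabs (x' - x) < eps -> D i j t' x' = 0.
Proof.
  intros [Ht [Hx _]] H0.
  assert (Hball : forall y z d, Rabs (y - z) < eps - Rabs (z - d) -> Rabs (y - d) < eps).
  { intros y z d H. assert (T := Rabs_triang (y - z) (z - d)).
    replace (y - z + (z - d)) with (y - d) in T by ring. lra. }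
  assert (step_x : forall i j, (forall t' x', Rabs (t' - t) < eps -> Rabs (x' - x) < eps -> D i j t' x' = 0) ->
            forall t' x', Rabs (t' - t) < eps -> Rabs (x' - x) < eps -> D i (S j) t' x' = 0).
  { intros i j IH t' x' H1 H2. apply (uniqueness_limite (fun y => D i j t' y) x'); [apply Hx|].
    apply (derivable_pt_lim_locally_zero _ x' (eps - Rabs (x' - x))); [lra|].
    intros y Hy. apply IH; [exact H1 | exact (Hball y x' x Hy)]. }
  assert (step_t : forall i j, (forall t' x', Rabs (t' - t) < eps -> Rabs (x' - x) < eps -> D i j t' x' = 0) ->
            forall t' x', Rabs (t' - t) < eps -> Rabs (x' - x) < eps -> D (S i) j t' x' = 0).
  { intros i j IH t' x' H1 H2. apply (uniqueness_limite (fun s => D i j s x') t'); [apply Ht|].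
    apply (derivable_pt_lim_locally_zero _ t' (eps - Rabs (t' - t))); [lra|].
    intros y Hy. apply IH; [exact (Hball y t' t Hy) | exact H2]. }
  intros i. induction i as [|i IHi]; intros j.
  - induction j; auto.
  - apply step_t, IHi.
Qed.

Lemma pexp_pos m : (1 <= m)%nat -> 0 < pexp m.
Proof. intros Hm. unfold pexp. apply le_INR in Hm. simpl in Hm. apply Rdiv_lt_0_compat; lra. Qed.

Lemma Rpower_pexp_pow R m : 0 < R -> (1 <= m)%nat ->
  Rpower R (pexp m) ^ (2 * (2 * m - 1)) = R ^ (2 * (2 * m - 1) + 2).
Proof.
  intros HR Hm.
  assert (Hp : 0 < Rpower R (pexp m)) by apply exp_pos.
  rewrite <- (Rpower_pow _ _ Hp), Rpower_mult, <- Rpower_pow by auto.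
  f_equal. unfold pexp. rewrite plus_INR, !mult_INR, minus_INR, mult_INR by lia.
  replace (INR 2) with 2 by (simpl; ring). apply le_INR in Hm. simpl INR in *. field. lra.
Qed.

(* [Q = wcoef (x + R phi)^2]. *)
Definition wcoef (m : nat) (g R : R) := 2 * g * Rpower R (pexp m) / R ^ 2.

Lemma wcoef_pos m g R : (1 <= m)%nat -> 0 < g -> 1 <= R -> 0 < wcoef m g R.
Proof.
  intros Hm Hg HR. unfold wcoef. apply Rdiv_lt_0_compat; [|apply pow_lt; lra].
  assert (0 < Rpower R (pexp m)) by apply exp_pos. nra.
Qed.

Lemma Rpower_pexp_ge1 m R : (1 <= m)%nat -> 1 <= R -> 1 <= Rpower R (pexp m).
Proof.
  intros Hm HR. rewrite <- (Rpower_O R) by lra.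
  apply Rle_Rpower; [lra | left; now apply pexp_pos].
Qed.

(* With [a = wcoef m g R] and [r = R d1], [a^2 r^2 - a >= 2 g^2 d1^2 P^2 / R^2] where [P = R^p];
   raising this to the power [2m-1] turns [P^(2(2m-1))] into [R^(4m)] exactly. *)
Lemma rho_ge m g R d1 : (1 <= m)%nat -> 1 <= R -> 1 <= g -> 1 <= g * d1 ^ 2 ->
  2 * g ^ 2 * d1 ^ 2 * (Rpower R (pexp m) ^ 2 / R ^ 2)
  <= wcoef m g R ^ 2 * (R * d1) ^ 2 - wcoef m g R.
Proof.
  intros Hm HR Hg Hgd. set (P := Rpower R (pexp m)).
  assert (HP : 1 <= P) by now apply Rpower_pexp_ge1.
  assert (HR2 : 0 < R ^ 2) by (apply pow_lt; lra).
  assert (E : wcoef m g R ^ 2 * (R * d1) ^ 2 - wcoef m g R - 2 * g ^ 2 * d1 ^ 2 * (P ^ 2 / R ^ 2)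
              = 2 * g * P / R ^ 2 * (g * d1 ^ 2 * P - 1)) by (unfold wcoef; fold P; field; lra).
  assert (0 <= 2 * g * P / R ^ 2 * (g * d1 ^ 2 * P - 1)).
  { apply Rmult_le_pos; [apply Rlt_le, Rdiv_lt_0_compat; nra|].
    assert (1 * 1 <= g * d1 ^ 2 * P) by (apply Rmult_le_compat; lra). lra. }
  lra.
Qed.

Lemma rho_pow_ge m g R d1 : (1 <= m)%nat -> 1 <= R -> 1 <= g -> 1 <= g * d1 ^ 2 ->
  (2 * d1 ^ 2) ^ (2 * m - 1) * g ^ (2 * (2 * m - 1)) * R ^ 2
  <= (wcoef m g R ^ 2 * (R * d1) ^ 2 - wcoef m g R) ^ (2 * m - 1).
Proof.
  intros Hm HR Hg Hgd. set (k := (2 * m - 1)%nat).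
  assert (HR2 : 0 < R ^ 2) by (apply pow_lt; lra).
  assert (HB0 : 0 <= 2 * g ^ 2 * d1 ^ 2 * (Rpower R (pexp m) ^ 2 / R ^ 2))
    by (apply Rmult_le_pos; [nra | apply Rlt_le, Rdiv_lt_0_compat; [apply pow_lt, exp_pos | lra]]).
  replace ((2 * d1 ^ 2) ^ k * g ^ (2 * k) * R ^ 2)
    with ((2 * g ^ 2 * d1 ^ 2 * (Rpower R (pexp m) ^ 2 / R ^ 2)) ^ k).
  - apply pow_incr. split; [easy|]. now apply rho_ge.
  - rewrite !Rpow_mult_distr. unfold Rdiv. rewrite Rpow_mult_distr, pow_inv, <- !pow_mult.
    rewrite (Nat.mul_comm 2 k), (Nat.mul_comm k 2).
    unfold k. rewrite Rpower_pexp_pow, pow_add by lia || lra. field. apply pow_nonzero; lra.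
Qed.

Lemma carleman_constants_at m g R d1 d2 M1 M2 : (1 <= m)%nat -> 0 < d1 -> 0 <= M2 -> 1 <= R ->
  1 <= g -> 1 <= g * d1 ^ 2 ->
  8 * M2 * d2 <= g * (2 * d1 ^ 2) ^ (2 * m - 1) -> 4 * M1 ^ 2 <= g * (2 * d1 ^ 2) ^ (2 * m - 1) ->
  let a := wcoef m g R in let rho := a ^ 2 * (R * d1) ^ 2 - a in
  0 < a /\ 0 <= rho /\ 4 * (R * M1) ^ 2 <= rho ^ (2 * m - 1) /\
  (2 * d1 ^ 2) ^ (2 * m - 1) / 2 * g ^ (4 * m - 1) * Rpower R (pexp m)
  <= a / 2 * rho ^ (2 * m - 1) - 2 * (R * M2) * (a * (R * d2)).
Proof.
  intros Hm Hd1 HM2 HR Hg Hgd HgM2 HgM1 a rho.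
  set (k := (2 * m - 1)%nat) in *. set (KK := (2 * d1 ^ 2) ^ k) in *.
  assert (HKK : 0 < KK) by (apply pow_lt; nra).
  assert (HR2 : 1 <= R ^ 2) by (rewrite <- (pow1 2); apply pow_incr; lra).
  assert (HP : 1 <= Rpower R (pexp m)) by now apply Rpower_pexp_ge1.
  assert (Ha : 0 < a) by (apply wcoef_pos; [exact Hm | lra | lra]).
  assert (Hrho0 : 0 <= rho).
  { apply Rle_trans with (2 * g ^ 2 * d1 ^ 2 * (Rpower R (pexp m) ^ 2 / R ^ 2)); [|now apply rho_ge].
    apply Rmult_le_pos; [nra | apply Rlt_le, Rdiv_lt_0_compat; [apply pow_lt, exp_pos | lra]]. }
  assert (Hrho : KK * g ^ (2 * k) * R ^ 2 <= rho ^ k) by now apply rho_pow_ge.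
  assert (Hgk : g <= g ^ (2 * k)) by (rewrite <- (pow_1 g) at 1; apply Rle_pow; [lra | unfold k; lia]).
  assert (HKg : g * KK <= KK * g ^ (2 * k)) by nra.
  repeat split; auto.
  - replace (4 * (R * M1) ^ 2) with (4 * M1 ^ 2 * R ^ 2) by ring.
    assert (4 * M1 ^ 2 * R ^ 2 <= g * KK * R ^ 2) by (apply Rmult_le_compat_r; lra).
    assert (g * KK * R ^ 2 <= KK * g ^ (2 * k) * R ^ 2) by (apply Rmult_le_compat_r; lra).
    lra.
  - replace (4 * m - 1)%nat with (2 * k + 1)%nat by (unfold k; lia). rewrite pow_add, pow_1.
    assert (Ea : 2 * (R * M2) * (a * (R * d2)) = g * Rpower R (pexp m) * (8 * M2 * d2) / 2)
      by (unfold a, wcoef; field; lra).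
    assert (Eb : a / 2 * (KK * g ^ (2 * k) * R ^ 2) = KK * (g ^ (2 * k) * g) * Rpower R (pexp m))
      by (unfold a, wcoef; field; lra).
    assert (a / 2 * (KK * g ^ (2 * k) * R ^ 2) <= a / 2 * rho ^ k) by (apply Rmult_le_compat_l; lra).
    assert (g * Rpower R (pexp m) * (8 * M2 * d2) <= g * Rpower R (pexp m) * (KK * g ^ (2 * k)))
      by (apply Rmult_le_compat_l; nra).
    lra.
Qed.

Lemma carleman_constants m d1 d2 M1 M2 : (1 <= m)%nat -> 0 < d1 -> 0 <= M1 -> 0 <= M2 ->
  exists g0, 0 < g0 /\ forall g R, g0 <= g -> 1 <= R ->
    let a := wcoef m g R in let rho := a ^ 2 * (R * d1) ^ 2 - a in
    0 < a /\ 0 <= rho /\ 4 * (R * M1) ^ 2 <= rho ^ (2 * m - 1) /\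
    (2 * d1 ^ 2) ^ (2 * m - 1) / 2 * g ^ (4 * m - 1) * Rpower R (pexp m)
    <= a / 2 * rho ^ (2 * m - 1) - 2 * (R * M2) * (a * (R * d2)).
Proof.
  intros Hm Hd1 HM1 HM2. set (KK := (2 * d1 ^ 2) ^ (2 * m - 1)).
  assert (HKK : 0 < KK) by (apply pow_lt; nra).
  assert (Hd1' : 0 < d1 ^ 2) by nra.
  exists (1 + 1 / d1 ^ 2 + Rabs (8 * M2 * d2) / KK + 4 * M1 ^ 2 / KK).
  assert (0 <= 1 / d1 ^ 2) by (apply Rlt_le, Rdiv_lt_0_compat; lra).
  assert (0 <= Rabs (8 * M2 * d2) / KK) by (apply Rdiv_le_0_compat; [apply Rabs_pos | lra]).
  assert (0 <= 4 * M1 ^ 2 / KK) by (apply Rdiv_le_0_compat; nra).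
  split; [lra|]. intros g R Hg HR.
  apply carleman_constants_at; auto; try lra; fold KK.
  - replace 1 with (1 / d1 ^ 2 * d1 ^ 2) by (field; lra). apply Rmult_le_compat_r; lra.
  - apply Rle_trans with (Rabs (8 * M2 * d2)); [apply RRle_abs|].
    replace (Rabs (8 * M2 * d2)) with (Rabs (8 * M2 * d2) / KK * KK) by (field; lra).
    apply Rmult_le_compat_r; lra.
  - replace (4 * M1 ^ 2) with (4 * M1 ^ 2 / KK * KK) by (field; lra). apply Rmult_le_compat_r; lra.
Qed.

Section Assembly.
Variables (m : nat) (phi : R -> R) (D : nat -> R -> R) (d1 d2 M2 g Rr : R).
Variables (Ur Ui : nat -> nat -> R -> R -> R) (t0 t1 L : R).
Hypothesis Hm : (1 <= m)%nat.
Hypothesis HD0 : forall x, 0 <= x <= 1 -> D 0%nat x = phi x.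
Hypothesis HD : forall n t, 0 < t < 1 -> derivable_pt_lim (D n) t (D (S n) t).
Hypothesis HM2 : forall t, 0 <= t <= 1 -> Rabs (D 2%nat t) <= M2.
Hypothesis Hd1 : 0 < d1.
Hypothesis HR : 0 < Rr.
Hypothesis HUr : smooth_family Ur.
Hypothesis HUi : smooth_family Ui.
Hypothesis Ht0 : 0 < t0.
Hypothesis Ht1 : t1 < 1.
Hypothesis HL : forall t x, in_supp (Ur 0%nat 0%nat) (Ui 0%nat 0%nat) t x -> t0 <= t <= t1 /\ Rabs x <= L.
Hypothesis Hin : forall t x, in_supp (Ur 0%nat 0%nat) (Ui 0%nat 0%nat) t x ->
  d1 <= Rabs (x / Rr + phi t) <= d2.

Let a := wcoef m g Rr.
Let sh n t := Rr * D n t.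
Let K := Rabs L + 1.

Let HK : 0 < K.
Proof. unfold K. assert (0 <= Rabs L) by apply Rabs_pos. lra. Qed.

Lemma support_in_region i j t x : Ur i j t x <> 0 \/ Ui i j t x <> 0 ->
  in_region sh K t0 t1 (Rr * d1) (Rr * d2) t x.
Proof.
  intros Hnz. destruct (classic (in_supp (Ur 0%nat 0%nat) (Ui 0%nat 0%nat) t x)) as [Hs|Hs].
  - destruct (HL t x Hs) as [Ht Hx]. split; [easy|]. split.
    + unfold K. assert (L <= Rabs L) by apply RRle_abs. lra.
    + replace (x + sh 0%nat t) with (Rr * (x / Rr + phi t)) by (unfold sh; rewrite HD0 by lra; field; lra).
      rewrite Rabs_mult, (Rabs_right Rr) by lra. specialize (Hin t x Hs).
      split; apply Rmult_le_compat_l; lra.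
  - exfalso. destruct (not_in_supp _ _ t x Hs) as [eps [He Hbox]].
    assert (Z1 := smooth_family_locally_zero Ur t x eps HUr (fun t' x' h1 h2 => proj1 (Hbox t' x' h1 h2)) i j t x).
    assert (Z2 := smooth_family_locally_zero Ui t x eps HUi (fun t' x' h1 h2 => proj2 (Hbox t' x' h1 h2)) i j t x).
    rewrite !Rminus_eq_0, !Rabs_R0 in Z1, Z2. destruct Hnz as [N|N]; apply N; [apply Z1 | apply Z2]; lra.
Qed.

Lemma exp_Qw t x : 0 < t < 1 -> exp (Qw m phi g Rr t x) = weight sh a t x.
Proof.
  intros Ht. unfold weight, wt, Qw, a, wcoef, sh. rewrite HD0 by lra. f_equal. field. lra.
Qed.

Lemma eq_off_support (F G : R -> R -> R) :
  (forall t x, 0 < t < 1 -> F t x = G t x) -> (forall t x, vanishes_at Ur Ui t x -> F t x = 0 /\ G t x = 0) ->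
  F = G.
Proof.
  intros HFG Hz. apply functional_extensionality; intros t; apply functional_extensionality; intros x.
  destruct (classic (t0 <= t <= t1)) as [Ht|Ht]; [apply HFG; lra|].
  assert (HZ := vanishes_t Ur Ui sh K t0 t1 (Rr * d1) (Rr * d2) support_in_region t x ltac:(lra)).
  destruct (Hz t x HZ) as [-> ->]. reflexivity.
Qed.
Let Hsh n t : 0 < t < 1 -> derivable_pt_lim (sh n) t (sh (S n) t).
Proof. intros. now apply derivable_pt_lim_scal, HD. Qed.

Lemma iint_lhs :
  iint (fun t x => exp (Qw m phi g Rr t x) * (Pu_re m Ur Ui t x ^ 2 + Pu_im m Ur Ui t x ^ 2))
  = RInt2 K (lhs_integrand Ur Ui sh a m).
Proof.
  rewrite (eq_off_support _ (lhs_integrand Ur Ui sh a m)).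
  - apply (iint_compact K HK).
    + exact (continuous2_lhs Ur Ui sh a K t0 t1 _ _ HUr HUi Hsh Ht0 Ht1 support_in_region m).
    + intros t x Hx. assert (HZ := vanishes_x Ur Ui sh K t0 t1 _ _ support_in_region t x Hx).
      unfold lhs_integrand. rewrite !(proj1 (HZ _ _)), !(proj2 (HZ _ _)). ring.
  - intros t x Ht. unfold lhs_integrand, Pu_re, Pu_im, sgn, deg. now rewrite exp_Qw.
  - intros t x HZ. unfold lhs_integrand, Pu_re, Pu_im. rewrite !(proj1 (HZ _ _)), !(proj2 (HZ _ _)).
    split; ring.
Qed.

Lemma iint_mass :
  iint (fun t x => exp (Qw m phi g Rr t x) * (Ur 0%nat 0%nat t x ^ 2 + Ui 0%nat 0%nat t x ^ 2))
  = RInt2 K (mass_integrand Ur Ui sh a).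
Proof.
  rewrite (eq_off_support _ (mass_integrand Ur Ui sh a)).
  - apply (iint_compact K HK).
    + exact (continuous2_mass Ur Ui sh a K t0 t1 _ _ HUr HUi Hsh Ht0 Ht1 support_in_region).
    + intros t x Hx. assert (HZ := vanishes_x Ur Ui sh K t0 t1 _ _ support_in_region t x Hx).
      unfold mass_integrand, abs2. rewrite !(proj1 (HZ _ _)), !(proj2 (HZ _ _)). ring.
  - intros t x Ht. unfold mass_integrand, abs2. now rewrite exp_Qw.
  - intros t x HZ. unfold mass_integrand, abs2. rewrite !(proj1 (HZ _ _)), !(proj2 (HZ _ _)).
    split; ring.
Qed.

Lemma RInt2_mass_ge0 : 0 <= RInt2 K (mass_integrand Ur Ui sh a).
Proof.
  assert (Hcm := continuous2_mass Ur Ui sh a K t0 t1 _ _ HUr HUi Hsh Ht0 Ht1 support_in_region).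
  pose proof HK.
  apply RInt_ge0; [lra | apply (ex_RInt_outer K HK), Hcm |].
  intros t _. apply RInt_ge0; [lra | apply ex_RInt_continuity, continuous2_slice, Hcm |].
  intros x _. apply Rmult_le_pos; [left; apply wt_pos | apply Rplus_le_le_0_compat; apply pow2_ge_0].
Qed.

Lemma iint_estimate c :
  0 < a -> 0 <= a ^ 2 * (Rr * d1) ^ 2 - a ->
  (forall t, 0 < t < 1 -> 4 * (Rr * D 1%nat t) ^ 2 <= (a ^ 2 * (Rr * d1) ^ 2 - a) ^ (2 * m - 1)) ->
  c <= a / 2 * (a ^ 2 * (Rr * d1) ^ 2 - a) ^ (2 * m - 1) - 2 * (Rr * M2) * (a * (Rr * d2)) ->
  iint (fun t x => exp (Qw m phi g Rr t x) * (Pu_re m Ur Ui t x ^ 2 + Pu_im m Ur Ui t x ^ 2))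
  >= c * iint (fun t x => exp (Qw m phi g Rr t x) * (Ur 0%nat 0%nat t x ^ 2 + Ui 0%nat 0%nat t x ^ 2)).
Proof.
  intros Ha Hrho Hdrift Hc. rewrite iint_lhs, iint_mass.
  assert (HM2' : forall t, 0 < t < 1 -> Rabs (sh 2%nat t) <= Rr * M2).
  { intros t Ht. unfold sh. rewrite Rabs_mult, (Rabs_right Rr) by lra.
    apply Rmult_le_compat_l; [lra | apply HM2; lra]. }
  apply Rle_ge, Rle_trans with (2 := RInt2_lhs_ge Ur Ui sh a K t0 t1 (Rr * d1) (Rr * d2) HUr HUi Hsh
    Ha HK Ht0 Ht1 support_in_region m Hm (Rr * M2) HM2' ltac:(nra) Hrho Hdrift).
  apply Rmult_le_compat_r; [apply RInt2_mass_ge0 | exact Hc].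
Qed.

End Assembly.

Theorem lemma2p6 (m : nat) (phi : R -> R) (d1 d2 : R) :
  (1 <= m)%nat -> smooth01 phi -> 0 < d1 -> d1 <= d2 ->
  exists g0 R0 C, 0 < g0 /\ 0 < R0 /\ 0 < C /\
    forall (g Rr : R), g0 <= g -> R0 <= Rr ->
    forall (Ur Ui : nat -> nat -> R -> R -> R),
      smooth_family Ur -> smooth_family Ui ->
      compact_supp_strip (Ur 0%nat 0%nat) (Ui 0%nat 0%nat) ->
      (forall t x, in_supp (Ur 0%nat 0%nat) (Ui 0%nat 0%nat) t x ->
         d1 <= Rabs (x / Rr + phi t) <= d2) ->
      iint (fun t x => exp (Qw m phi g Rr t x) *
              (Pu_re m Ur Ui t x ^ 2 + Pu_im m Ur Ui t x ^ 2))
      >= C * g ^ (4 * m - 1) * Rpower Rr (pexp m) *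
         iint (fun t x => exp (Qw m phi g Rr t x) *
              (Ur 0%nat 0%nat t x ^ 2 + Ui 0%nat 0%nat t x ^ 2)).
Proof.
  (* [d1 <= d2] only makes the support condition satisfiable. *)
  intros Hm [D [HD0 HDd]] Hd1 _.
  assert (HD : forall n t, 0 < t < 1 -> derivable_pt_lim (D n) t (D (S n) t))
    by (intros; apply deriv_within01_interior, HDd; lra).
  destruct (deriv_within01_bounded (D 1%nat) (D 2%nat) (HDd 1%nat)) as [M1 [HM1 HM1b]].
  destruct (deriv_within01_bounded (D 2%nat) (D 3%nat) (HDd 2%nat)) as [M2 [HM2 HM2b]].
  destruct (carleman_constants m d1 d2 M1 M2 Hm Hd1 HM1 HM2) as [g0 [Hg0 Hconst]].
  exists g0, 1, ((2 * d1 ^ 2) ^ (2 * m - 1) / 2).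
  split; [easy | split; [lra | split; [apply Rdiv_lt_0_compat; [apply pow_lt; nra | lra] |]]].
  intros g Rr Hg HR Ur Ui HUr HUi [t0 [t1 [L [Ht0 [Ht1 HL]]]]] Hin.
  destruct (Hconst g Rr Hg HR) as [Ha [Hrho [Hdrift Hfinal]]].
  apply (iint_estimate m phi D d1 d2 M2 g Rr Ur Ui t0 t1 L); auto; try lra.
  intros t Ht. eapply Rle_trans; [|apply Hdrift].
  rewrite !Rpow_mult_distr. apply Rmult_le_compat_l; [lra|]. apply Rmult_le_compat_l; [nra|].
  rewrite <- (pow2_abs (D 1%nat t)). apply pow_incr. split; [apply Rabs_pos | apply HM1b; lra].
Qed.
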